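(* For every integer $m\ge2$ there exists a weight $\mathbf a$ such that $\mathbb T^{m,\mathbf a}$ bi-Lipschitz embeds into $\mathbb R^2$ with the embedded image being a quasiconvex subset of $\mathbb R^2$.
   Context: Let $A=\{1,\dots,m\}$. $A^k$: words of length $k$ ($A^0=\{\varepsilon\}$), $A^*=\bigcup_kA^k$, $A^{\mathbb N}$: infinite words; $A^n_u$, $A^{\mathbb N}_u$: words beginning with $u$; $w(n)$: length-$n$ prefix; $i^{(k)}$: $k$ copies of $i$. Graphs $G_k=(A^k,E_k)$: $E_1=\{\{1,i\}:i\ne1\}$, $E_{k+1}=\{\{12^{(k)},i1^{(k)}\}:i\in A\setminus\{1\}\}\cup\{\{iw,iu\}:i\in A,\{w,u\}\in E_k\}$. $A^{\mathbb N}_{u_1}\wedge A^{\mathbb N}_{u_2}$: the $w\in A^{\mathbb N}_{u_1}$ such that for every $n>\max\{|u_1|,|u_2|\}$ some $u\in A^n_{u_2}$ has $\{w(n),u\}\in E_n$, together with the symmetric set. Chain joining $w,w'$: list $A^{\mathbb N}_{v_1},\dots,A^{\mathbb N}_{v_N}$, $w\in A^{\mathbb N}_{v_1}$, $w'\in A^{\mathbb N}_{v_N}$, consecutive $\wedge$ nonempty. Weight: non-increasing $\mathbf a:\mathbb N\to(0,1/2]$ with $\mathbf a(1)=\mathbf a(2)=1/2$, $\mathbf a(i)\to0$; $\Delta_{\mathbf a}(i_1\cdots i_k)=\prod\mathbf a(i_j)$, $\Delta_{\mathbf a}(\varepsilon)=1$. $\rho(w,u)=\inf\sum_{i=1}^N\Delta_{\mathbf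 a}(v_i)$ over chains; $\mathbb T^{m,\mathbf a}=A^{\mathbb N}/\{\rho=0\}$ with the induced metric. A set $E\subset\mathbb R^2$ is quasiconvex if there is $C$ such that any $x,y\in E$ are joined by a path in $E$ of length $\le C|x-y|$. *)

From Stdlib Require Import Reals Lra List.
From Coquelicot Require Import Rbar Lub.
Import ListNotations.
Open Scope R_scope.

Definition letter (m i : nat) : Prop := (1 <= i <= m)%nat.

Definition fword (m : nat) (v : list nat) : Prop := Forall (letter m) v.

Definition iword (m : nat) (w : nat -> nat) : Prop := forall n, letter m (w n).

Definition pref (w : nat -> nat) (n : nat) : list nat := map w (seq 0 n).

Definition ibegins (w : nat -> nat) (u : list nat) : Prop := pref w (length u) = u.

Definition fbegins (u v : list nat) : Prop := firstn (length v) u = v.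

(* Edge sets E_k of the graphs G_k (as symmetric relations on A^k).
   E_1 = {{1,i} : i <> 1},
   E_{k+1} = {{1 2^(k), i 1^(k)} : i in A\{1}} u {{iw,iu} : i in A, {w,u} in E_k}. *)
Fixpoint Edge (m k : nat) (x y : list nat) : Prop :=
  match k with
  | O => False
  | S k' =>
    match k' with
    | O => exists i, (2 <= i <= m)%nat /\
             ((x = [1%nat] /\ y = [i]) \/ (x = [i] /\ y = [1%nat]))
    | S _ =>
      (exists i, (2 <= i <= m)%nat /\
         ((x = 1%nat :: repeat 2%nat k' /\ y = i :: repeat 1%nat k') \/
          (x = i :: repeat 1%nat k' /\ y = 1%nat :: repeat 2%nat k')))
      \/ (exists i w u, letter m i /\ x = i :: w /\ y = i :: u /\ Edge m k' w u)
    end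
  end.

Definition wedge_half (m : nat) (u1 u2 : list nat) (w : nat -> nat) : Prop :=
  iword m w /\ ibegins w u1 /\
  forall n, (n > Nat.max (length u1) (length u2))%nat ->
    exists u, length u = n /\ fword m u /\ fbegins u u2 /\ Edge m n (pref w n) u.

Definition wedge (m : nat) (u1 u2 : list nat) (w : nat -> nat) : Prop :=
  wedge_half m u1 u2 w \/ wedge_half m u2 u1 w.

Definition wedge_nonempty (m : nat) (u1 u2 : list nat) : Prop :=
  exists w, wedge m u1 u2 w.

Fixpoint consecutive_wedges (m : nat) (vs : list (list nat)) : Prop :=
  match vs with
  | v1 :: ((v2 :: _) as rest) => wedge_nonempty m v1 v2 /\ consecutive_wedges m rest
  | _ => True
  end.

Definition chain (m : nat) (w w' : nat -> nat) (vs : list (list nat)) : Prop :=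
  vs <> [] /\ Forall (fword m) vs /\
  ibegins w (hd [] vs) /\ ibegins w' (last vs []) /\
  consecutive_wedges m vs.

Definition weight (a : nat -> R) : Prop :=
  (forall n, (1 <= n)%nat -> 0 < a n <= 1/2) /\
  (forall n, (1 <= n)%nat -> a (S n) <= a n) /\
  a 1%nat = 1/2 /\ a 2%nat = 1/2 /\
  Un_cv a 0.

Fixpoint Delta (a : nat -> R) (v : list nat) : R :=
  match v with
  | [] => 1
  | i :: v' => a i * Delta a v'
  end.

Definition chain_sum (a : nat -> R) (vs : list (list nat)) : R :=
  fold_right (fun v s => Delta a v + s) 0 vs.

Definition chain_sums (m : nat) (a : nat -> R) (w u : nat -> nat) : R -> Prop :=
  fun r => exists vs, chain m w u vs /\ r = chain_sum a vs.

(* rho(w,u) = inf of chain sums (always finite: the one-element chain [eps]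
   gives 1, and all sums are >= 0). *)
Definition rho (m : nat) (a : nat -> R) (w u : nat -> nat) : R :=
  real (Glb_Rbar (chain_sums m a w u)).

Definition dist2 (p q : R * R) : R :=
  sqrt ((fst p - fst q) ^ 2 + (snd p - snd q) ^ 2).

(* f : A^N -> R^2 induces a bi-Lipschitz embedding of T^{m,a} = A^N/{rho=0}
   (with the induced metric) into R^2. *)
Definition bilip_embedding (m : nat) (a : nat -> R) (f : (nat -> nat) -> R * R) : Prop :=
  exists L, 0 < L /\
    forall w u, iword m w -> iword m u ->
      rho m a w u / L <= dist2 (f w) (f u) <= L * rho m a w u.

Definition path_continuous (g : R -> R * R) : Prop :=
  forall t, 0 <= t <= 1 -> forall eps, 0 < eps ->
    exists delta, 0 < delta /\
      forall s, 0 <= s <= 1 -> Rabs (s - t) < delta -> dist2 (g s) (g t) < eps.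

Fixpoint poly_sum (g : R -> R * R) (t : nat -> R) (n : nat) : R :=
  match n with
  | O => 0
  | S k => poly_sum g t k + dist2 (g (t (S k))) (g (t k))
  end.

Definition path_length_le (g : R -> R * R) (ell : R) : Prop :=
  forall (n : nat) (t : nat -> R), t 0%nat = 0 -> t n = 1 ->
    (forall i, (i < n)%nat -> t i <= t (S i)) ->
    poly_sum g t n <= ell.

Definition quasiconvex (E : R * R -> Prop) : Prop :=
  exists C, forall x y, E x -> E y ->
    exists g : R -> R * R,
      path_continuous g /\ (forall t, 0 <= t <= 1 -> E (g t)) /\
      g 0 = x /\ g 1 = y /\ path_length_le g (C * dist2 x y).

Definition image (m : nat) (f : (nat -> nat) -> R * R) : R * R -> Prop :=
  fun p => exists w, iword m w /\ f w = p.

(* Realise the space as the attractor of similitudes of the isosceles triangle [D] with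
   base [0, 1] and base angles [beta = PI / (2 m)]: [psi 1], [psi 2] map [D] onto its halves
   over [0, 1/2] and [1/2, 1], and [psi i] ([i >= 3]) onto a copy of ratio
   [a i = tan beta / (4 i)] hanging from the midpoint [c], turned so that, seen from [c], the
   [m] copies fill sectors of opening [beta] that are [beta] apart.  The words [1 2 2 ...]
   and [i 1 1 ...] are all coded by [c], which makes the coding map [f] 2-Lipschitz for
   [rho]: a chain can be followed by points of cylinders of diameter [Delta a].
   Conversely, where two words first differ, the separation of the sectors makes
   [|f x - f y|] comparable to the distances of both branches to [c], and a run of [k]
   tail letters after the difference is paid for by a distance at least [2^-k / 4] to [c];
   this bounds a five-link chain through [c].  Finally, a self-similar substitution (trace
   [0, 1] by binary expansion, then descend into the copy [psi (x 0)]) yields 1-Lipschitz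
   paths inside the image from [0] and from [1] to every [f x]; transported by the maps
   [Psi] of the two cut words, two of them join [f x] to [f y] through [Psi v c] with
   length [O(|f x - f y|)]. *)

From Pilot Require Import Defs.
From Stdlib Require Import Reals Lra Lia List Classical Wf_nat.
From Coquelicot Require Import Coquelicot.
Import ListNotations.
Open Scope R_scope.

(* Coquelicot exports another [Delta]. *)
Local Notation Delta := Defs.Delta.

(** * Infinite words, the graphs [G_k] and wedges *)

Definition scons (k : nat) (w : nat -> nat) : nat -> nat :=
  fun n => match n with O => k | S n' => w n' end.
Definition shift (w : nat -> nat) : nat -> nat := fun n => w (S n).
Definition shiftn (n : nat) (w : nat -> nat) : nat -> nat := fun k => w (n + k)%nat.
Definition cst (k : nat) : nat -> nat := fun _ => k.
Fixpoint prepend (v : list nat) (w : nat -> nat) : nat -> nat :=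
  match v with [] => w | k :: v' => scons k (prepend v' w) end.

Lemma first_index (P : nat -> Prop) : (forall n, P n \/ ~ P n) -> (exists n, P n) ->
  exists n0, P n0 /\ forall k, (k < n0)%nat -> ~ P k.
Proof.
  intros Hdec Hex.
  destruct (dec_inh_nat_subset_has_unique_least_element P Hdec Hex) as [n0 [[Hn0 Hmin] _]].
  exists n0. split; auto. intros k Hk Pk. specialize (Hmin k Pk). lia.
Qed.

Lemma pref_length w n : length (pref w n) = n.
Proof. unfold pref. rewrite length_map, length_seq. reflexivity. Qed.

Lemma pref_S w n : pref w (S n) = w O :: pref (shift w) n.
Proof. unfold pref, shift. simpl. f_equal. rewrite <- seq_shift, map_map. reflexivity. Qed.

Lemma pref_Sr w n : pref w (S n) = pref w n ++ [w n].
Proof. unfold pref. rewrite seq_S, map_app. reflexivity. Qed.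

Lemma pref_ext_lt x y n : (forall k, (k < n)%nat -> x k = y k) -> pref x n = pref y n.
Proof. intros H. unfold pref. apply map_ext_in. intros a Ha. apply in_seq in Ha. apply H. lia. Qed.

Lemma pref_ext x y n : (forall k, x k = y k) -> pref x n = pref y n.
Proof. intros H. apply pref_ext_lt. auto. Qed.

Lemma pref_nth w n k : (k < n)%nat -> nth k (pref w n) O = w k.
Proof.
  intros H. unfold pref.
  rewrite nth_indep with (d' := w O) by (rewrite length_map, length_seq; lia).
  rewrite map_nth, seq_nth by lia. reflexivity.
Qed.

Lemma pref_add x n j : pref x (n + j) = pref x n ++ pref (shiftn n x) j.
Proof.
  induction j as [|j IH]. { rewrite Nat.add_0_r, app_nil_r. reflexivity. }
  rewrite Nat.add_succ_r, !pref_Sr, IH, app_assoc. reflexivity.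
Qed.

Lemma pref_firstn x n k : (k <= n)%nat -> firstn k (pref x n) = pref x k.
Proof.
  intros H. replace n with (k + (n - k))%nat by lia.
  rewrite pref_add, firstn_app, pref_length, Nat.sub_diag, app_nil_r.
  apply firstn_all2. rewrite pref_length. lia.
Qed.

Lemma pref_cst c j : pref (cst c) j = repeat c j.
Proof.
  induction j as [|j IH]. reflexivity.
  rewrite pref_Sr, IH. symmetry. apply repeat_cons.
Qed.

Lemma pref_prepend v w n : pref (prepend v w) (length v + n) = v ++ pref w n.
Proof.
  induction v as [|k v IH]. reflexivity.
  simpl length. rewrite Nat.add_succ_l, pref_S. simpl. f_equal. exact IH.
Qed.

Lemma pref_prepend_le v w n : (n <= length v)%nat -> pref (prepend v w) n = firstn n v.
Proof.
  intros Hn. replace (pref (prepend v w) n) with (firstn n (pref (prepend v w) (length v + 0))).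
  - rewrite pref_prepend, firstn_app. replace (n - length v)%nat with O by lia.
    apply app_nil_r.
  - apply pref_firstn. lia.
Qed.

Lemma prepend_nth v w k : (k < length v)%nat -> prepend v w k = nth k v O.
Proof.
  revert k; induction v as [|h v IH]; intros k Hk; simpl in *. lia.
  destruct k. reflexivity. apply IH. lia.
Qed.

Lemma prepend_after v w k : prepend v w (length v + k)%nat = w k.
Proof. induction v as [|h v IH]; auto. Qed.

Lemma ibegins_prepend v w : ibegins (prepend v w) v.
Proof. unfold ibegins. rewrite pref_prepend_le by lia. apply firstn_all. Qed.

Lemma ibegins_pref x n : ibegins x (pref x n).
Proof. unfold ibegins. rewrite pref_length. reflexivity. Qed.

Lemma pref_prepend_cst r c e k :
  pref (prepend r (scons c (cst e))) (length r + S k) = r ++ c :: repeat e k.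
Proof.
  rewrite pref_prepend, pref_S. exact (f_equal (fun l => r ++ c :: l) (pref_cst e k)).
Qed.

Lemma ibegins_prepend_cst r c e k : ibegins (prepend r (scons c (cst e))) (r ++ c :: repeat e k).
Proof.
  unfold ibegins. rewrite length_app. simpl. rewrite repeat_length. apply pref_prepend_cst.
Qed.

Lemma ibegins_decomp x v : ibegins x v -> forall k, x k = prepend v (shiftn (length v) x) k.
Proof.
  intros H k. destruct (Nat.lt_ge_cases k (length v)) as [Hk|Hk].
  - rewrite prepend_nth, <- H, pref_nth; auto.
  - replace k with (length v + (k - length v))%nat by lia. rewrite prepend_after. reflexivity.
Qed.

Lemma ibegins_app_shiftn x n u : ibegins (shiftn n x) u -> ibegins x (pref x n ++ u).
Proof. unfold ibegins. intros H. rewrite length_app, pref_length, pref_add, H. reflexivity. Qed.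

Lemma shiftn_scons x n k : shiftn n x k = scons (x n) (shiftn (S n) x) k.
Proof. unfold shiftn, scons. destruct k; f_equal; lia. Qed.

Lemma iword_shift m w : iword m w -> iword m (shift w).
Proof. unfold iword, shift. auto. Qed.

Lemma iword_shiftn m n w : iword m w -> iword m (shiftn n w).
Proof. unfold iword, shiftn. auto. Qed.

Lemma iword_scons m k w : letter m k -> iword m w -> iword m (scons k w).
Proof. unfold iword. intros Hk Hw [|n]; simpl; auto. Qed.

Lemma iword_prepend m v w : fword m v -> iword m w -> iword m (prepend v w).
Proof. intros Hv Hw. induction Hv; simpl; auto. apply iword_scons; auto. Qed.

Lemma iword_cst m k : letter m k -> iword m (cst k).
Proof. unfold iword, cst. auto. Qed.

Lemma fword_pref m w n : iword m w -> fword m (pref w n).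
Proof.
  intros H. unfold fword, pref. apply Forall_forall. intros x Hx.
  apply in_map_iff in Hx. destruct Hx as [k [<- _]]. apply H.
Qed.

Lemma fword_app m u v : fword m u -> fword m v -> fword m (u ++ v).
Proof. unfold fword. intros. apply Forall_app; auto. Qed.

Lemma fword_of_ibegins m x v : iword m x -> ibegins x v -> fword m v.
Proof. intros Hx Hv. rewrite <- Hv. apply fword_pref; auto. Qed.

Lemma Edge_cons m h k s t : letter m h -> Edge m k s t -> Edge m (S k) (h :: s) (h :: t).
Proof.
  intros Hh HE. destruct k as [|k]; [contradiction|].
  right. exists h, s, t. auto.
Qed.

Lemma Edge_app m v k s t : fword m v -> Edge m k s t -> Edge m (length v + k) (v ++ s) (v ++ t).
Proof. intros Hv HE. induction Hv; simpl; auto. apply Edge_cons; auto. Qed.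

Lemma Edge_base m i k : (2 <= i <= m)%nat ->
  Edge m (S k) (1%nat :: repeat 2%nat k) (i :: repeat 1%nat k) /\
  Edge m (S k) (i :: repeat 1%nat k) (1%nat :: repeat 2%nat k).
Proof.
  intros Hi. destruct k as [|k]; split; simpl.
  1, 2: exists i; auto.
  1, 2: left; exists i; auto.
Qed.

Lemma Edge_inv m n s t : Edge m n s t ->
  exists r i k, fword m r /\ (2 <= i <= m)%nat /\
   ((s = r ++ 1%nat :: repeat 2%nat k /\ t = r ++ i :: repeat 1%nat k) \/
    (s = r ++ i :: repeat 1%nat k /\ t = r ++ 1%nat :: repeat 2%nat k)).
Proof.
  revert s t. induction n as [|n IH]; intros s t HE; [contradiction|].
  assert (Hnil : fword m []) by constructor.
  destruct n as [|n].
  - destruct HE as [i [Hi H]]. exists [], i, O. auto.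
  - destruct HE as [[i [Hi H]]|[h [w [u [Hh [-> [-> HE]]]]]]].
    + exists [], i, (S n). auto.
    + destruct (IH w u HE) as [r [i [k [Hr [Hi H]]]]].
      exists (h :: r), i, k. split; [constructor; auto|split; auto].
      destruct H as [[-> ->]|[-> ->]]; auto.
Qed.

Definition flip (a : nat) : nat := if Nat.eqb a 1 then 2%nat else 1%nat.

Lemma letter_flip m a : (2 <= m)%nat -> letter m (flip a).
Proof. unfold flip, letter. destruct (Nat.eqb a 1); lia. Qed.

Lemma Edge_flip_last m r a : (2 <= m)%nat -> fword m r -> letter m a ->
  Edge m (length r + 1) (r ++ [a]) (r ++ [flip a]).
Proof.
  intros Hm Hr Ha. apply Edge_app; auto. unfold flip, letter in *.
  destruct (Nat.eqb_spec a 1) as [->|].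
  - apply (Edge_base m 2 0). lia.
  - apply (Edge_base m a 0). lia.
Qed.

Lemma wedge_nonempty_sym m u1 u2 : wedge_nonempty m u1 u2 -> wedge_nonempty m u2 u1.
Proof. intros [w [H|H]]; exists w; [right|left]; auto. Qed.

(* Flipping the last letter of a prefix of [z] always gives an edge of [G_n]. *)
Lemma wedge_nonempty_common m z v1 v2 : (2 <= m)%nat -> iword m z ->
  ibegins z v1 -> ibegins z v2 -> wedge_nonempty m v1 v2.
Proof.
  intros Hm Hz H1 H2. exists z. left. split; [auto|split; [auto|]].
  intros n Hn. destruct n as [|n]; [lia|].
  assert (Hp : fword m (pref z n)) by (apply fword_pref; auto).
  exists (pref z n ++ [flip (z n)]). split; [|split; [|split]].
  - rewrite length_app, pref_length. simpl. lia.
  - apply fword_app; auto. constructor; [apply letter_flip; auto|constructor].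
  - unfold fbegins. rewrite firstn_app, pref_length.
    replace (length v2 - n)%nat with O by lia. rewrite app_nil_r, pref_firstn by lia.
    exact H2.
  - rewrite pref_Sr. replace (S n) with (length (pref z n) + 1)%nat by (rewrite pref_length; lia).
    apply Edge_flip_last; auto.
Qed.

Lemma wedge_nonempty_identified m v i N : fword m v -> (2 <= i <= m)%nat -> (length v < N)%nat ->
  wedge_nonempty m (pref (prepend v (scons i (cst 1%nat))) N)
                   (pref (prepend v (scons 1%nat (cst 2%nat))) N).
Proof.
  intros Hv Hi HN.
  assert (Hw : forall a b, letter m a -> letter m b -> iword m (prepend v (scons a (cst b)))).
  { intros a b Ha Hb. apply iword_prepend, iword_scons, iword_cst; auto. }
  exists (prepend v (scons 1%nat (cst 2%nat))). right. split; [|split].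
  - apply Hw; unfold letter; lia.
  - apply ibegins_pref.
  - intros n Hn. rewrite !pref_length in Hn.
    exists (pref (prepend v (scons i (cst 1%nat))) n). split; [|split; [|split]].
    + apply pref_length.
    + apply fword_pref, Hw; unfold letter; lia.
    + unfold fbegins. rewrite pref_length. apply pref_firstn. lia.
    + replace n with (length v + S (n - length v - 1))%nat by lia.
      rewrite !pref_prepend_cst. apply Edge_app; auto. apply Edge_base. auto.
Qed.

(** * Plane geometry *)

Lemma sin_half_le_cos b p : 0 < b < PI -> Rabs p <= PI/2 - b/2 -> sin (b/2) <= cos p.
Proof.
  intros Hb Hp. rewrite <- cos_shift.
  destruct (Rle_dec 0 p).
  - rewrite Rabs_right in Hp by lra. apply cos_decr_1; lra.
  - rewrite Rabs_left in Hp by lra. rewrite <- (cos_neg p). apply cos_decr_1; lra.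
Qed.

Definition rot (th : R) : C := (cos th, sin th).

Lemma rot_plus a b : (rot a * rot b = rot (a + b))%C.
Proof. unfold rot, Cmult. simpl. rewrite cos_plus, sin_plus. f_equal; ring. Qed.

Lemma rot_0 : rot 0 = 1%C.
Proof. unfold rot. rewrite cos_0, sin_0. reflexivity. Qed.

Lemma rot_PI : rot PI = RtoC (-1).
Proof. unfold rot. rewrite cos_PI, sin_PI. reflexivity. Qed.

Lemma rot_opp_mult a z : (rot a * (rot (- a) * z) = z)%C.
Proof. rewrite Cmult_assoc, rot_plus, Rplus_opp_r, rot_0. ring. Qed.

Lemma Cmod_rot a : Cmod (rot a) = 1.
Proof.
  unfold Cmod, rot. simpl fst; simpl snd. rewrite <- sqrt_1. f_equal.
  pose proof (sin2_cos2 a). unfold Rsqr in *. lra.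
Qed.

Lemma Cmod_rot_mult a z : Cmod (rot a * z) = Cmod z.
Proof. rewrite Cmod_mult, Cmod_rot. ring. Qed.

Lemma Cminus_0_r z : (z - 0 = z)%C.
Proof. ring. Qed.

Lemma Cmod_sym z w : Cmod (z - w) = Cmod (w - z).
Proof. rewrite <- Cmod_opp. f_equal. ring. Qed.

Lemma Cmod_snd z : Rabs (snd z) <= Cmod z.
Proof. eapply Rle_trans; [apply Rmax_r|apply Rmax_Cmod]. Qed.

Lemma Cmod_fst z : Rabs (fst z) <= Cmod z.
Proof. eapply Rle_trans; [apply Rmax_l|apply Rmax_Cmod]. Qed.

Lemma Cmod_triangle3 a b c : Cmod (a - c) <= Cmod (a - b) + Cmod (b - c).
Proof. replace (a - c)%C with ((a - b) + (b - c))%C by ring. apply Cmod_triangle. Qed.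

Lemma Cmod_sub_diag_le z K : 0 <= K -> Cmod (z - z) <= K.
Proof. intros. replace (z - z)%C with (RtoC 0) by ring. rewrite Cmod_0. lra. Qed.

Lemma Cmod_RtoC_sub a b : Cmod (RtoC a - RtoC b) = Rabs (a - b).
Proof. rewrite <- Cmod_R. f_equal. apply injective_projections; simpl; ring. Qed.

Section Cone.

Variable beta : R.
Hypothesis beta_range : 0 < beta <= PI / 4.

Definition tan_beta := sin beta / cos beta.
Definition kappa := sin (beta / 2) * cos beta.

Lemma cos_beta_pos : 0 < cos beta.
Proof. pose proof PI_RGT_0. apply cos_gt_0; lra. Qed.

Lemma sin_beta_pos : 0 < sin beta.
Proof. pose proof PI_RGT_0. apply sin_gt_0; lra. Qed.

Lemma tan_beta_cos : tan_beta * cos beta = sin beta.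
Proof. unfold tan_beta. field. pose proof cos_beta_pos. lra. Qed.

Lemma tan_beta_pos : 0 < tan_beta.
Proof. unfold tan_beta. pose proof cos_beta_pos; pose proof sin_beta_pos. apply Rdiv_lt_0_compat; lra. Qed.

Lemma tan_beta_le_1 : tan_beta <= 1.
Proof.
  pose proof cos_beta_pos. pose proof PI_RGT_0.
  assert (sin beta <= cos beta) by (rewrite <- cos_shift; apply cos_decr_1; lra).
  unfold tan_beta. apply Rmult_le_reg_r with (cos beta); auto. field_simplify; lra.
Qed.

Lemma kappa_pos : 0 < kappa.
Proof.
  unfold kappa. pose proof cos_beta_pos. pose proof PI_RGT_0.
  assert (0 < sin (beta / 2)) by (apply sin_gt_0; lra). nra.
Qed.

Definition in_cone (d : C) := 0 <= snd d <= tan_beta * fst d.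

Definition in_sector (s : R) (w : C) := in_cone (rot (- s) * w)%C.

Lemma in_cone_Cmod d : in_cone d -> cos beta * Cmod d <= fst d.
Proof.
  destruct d as [x y]. unfold in_cone. simpl. intros [Hy1 Hy2].
  pose proof cos_beta_pos. pose proof sin_beta_pos. pose proof tan_beta_cos.
  pose proof tan_beta_pos. pose proof (sin2_cos2 beta) as Hsc. unfold Rsqr in Hsc.
  assert (0 <= y * cos beta <= x * sin beta) by nra.
  assert (0 <= x) by nra.
  assert (Hsq : (cos beta * Cmod (x, y)) ^ 2 <= x ^ 2).
  { rewrite Rpow_mult_distr, Cmod2_alt. simpl.
    assert ((y * cos beta) * (y * cos beta) <= (x * sin beta) * (x * sin beta))
      by (apply Rmult_le_compat; lra).
    nra. }
  nra.
Qed.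

(* The rotated cone stays at angle at least [beta/2] from the imaginary axis. *)
Lemma in_cone_rot_fst d p : in_cone d -> - (PI/2 - beta/2) <= p -> p + beta <= PI/2 - beta/2 ->
  kappa * Cmod d <= fst (rot p * d)%C.
Proof.
  intros Hd Hp1 Hp2. pose proof (in_cone_Cmod d Hd) as Hcm.
  destruct d as [x y]. destruct Hd as [Hy1 Hy2]. simpl in *.
  pose proof cos_beta_pos. pose proof sin_beta_pos. pose proof PI_RGT_0.
  pose proof tan_beta_cos. pose proof tan_beta_pos.
  assert (Hx : 0 <= x) by nra.
  assert (0 < sin (beta/2)) by (apply sin_gt_0; lra).
  assert (C1 : sin (beta/2) <= cos p) by (apply sin_half_le_cos; [lra|apply Rabs_le; lra]).
  assert (C2 : sin (beta/2) <= cos (p + beta)) by (apply sin_half_le_cos; [lra|apply Rabs_le; lra]).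
  assert (Hmain : x * sin (beta/2) <= x * cos p - y * sin p).
  { destruct (Rle_dec (sin p) 0); [nra|].
    rewrite cos_plus in C2.
    assert (y * sin p <= tan_beta * x * sin p) by nra.
    assert (cos beta <= 1) by apply COS_bound.
    assert ((cos p - tan_beta * sin p) * cos beta = cos p * cos beta - sin p * sin beta)
      by (rewrite <- tan_beta_cos; ring).
    assert (0 <= cos p - tan_beta * sin p) by nra.
    assert (cos p * cos beta - sin p * sin beta <= cos p - tan_beta * sin p) by nra.
    nra. }
  assert (sin (beta/2) * (cos beta * Cmod (x, y)) <= sin (beta/2) * x)
    by (apply Rmult_le_compat_l; lra).
  unfold rot, Cmult, kappa. simpl. nra.
Qed.

(* Project onto the direction bisecting the angular gap between the sectors. *)
Lemma in_sector_separated s1 s2 w1 w2 : in_sector s1 w1 -> in_sector s2 w2 ->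
  2 * beta <= s2 - s1 <= PI - beta ->
  kappa * (Cmod w1 + Cmod w2) <= Cmod (w1 - w2).
Proof.
  intros H1 H2 Hs. pose proof PI_RGT_0.
  set (nu := (s1 + beta + s2) / 2 - PI / 2).
  set (P := fun w => fst (rot (- nu) * w)%C).
  assert (HP : forall w, P w <= Cmod w).
  { intros w. unfold P. eapply Rle_trans; [apply Rle_abs|].
    eapply Rle_trans; [apply Cmod_fst|]. rewrite Cmod_rot_mult. lra. }
  assert (P1 : kappa * Cmod w1 <= P w1).
  { unfold P. rewrite <- (rot_opp_mult s1 w1) at 2. rewrite Cmult_assoc, rot_plus.
    rewrite <- (Cmod_rot_mult (- s1) w1). apply in_cone_rot_fst; auto; unfold nu; lra. }
  assert (P2 : kappa * Cmod w2 <= - P w2).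
  { unfold P. rewrite <- (rot_opp_mult s2 w2) at 2. rewrite Cmult_assoc, rot_plus.
    replace (- nu + s2) with ((s2 - nu - PI) + PI) by ring.
    rewrite <- rot_plus, rot_PI.
    replace (rot (s2 - nu - PI) * RtoC (-1) * (rot (- s2) * w2))%C
      with (- (rot (s2 - nu - PI) * (rot (- s2) * w2)))%C by ring.
    simpl fst. rewrite Ropp_involutive, <- (Cmod_rot_mult (- s2) w2).
    apply in_cone_rot_fst; auto; unfold nu; lra. }
  assert (Lin : P (w1 - w2)%C = P w1 - P w2).
  { unfold P. replace (rot (- nu) * (w1 - w2))%C with (rot (- nu) * w1 - rot (- nu) * w2)%C by ring.
    reflexivity. }
  pose proof (HP (w1 - w2)%C). lra.
Qed.

End Cone.

(** * Limits and Lipschitz paths *)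

Lemma half_pow_lt eps : 0 < eps -> exists N, (1/2)^N < eps.
Proof.
  intros H. destruct (pow_lt_1_zero (1/2) ltac:(rewrite Rabs_right; lra) eps H) as [N HN].
  exists N. specialize (HN N (le_n N)). rewrite Rabs_right in HN; auto.
  apply Rle_ge, pow_le; lra.
Qed.

Lemma half_pow_antitone n k : (n <= k)%nat -> (1/2)^k <= (1/2)^n.
Proof.
  induction 1 as [|k _ IH]; [lra|]. simpl. pose proof (pow_le (1/2) k ltac:(lra)). lra.
Qed.

Lemma le_of_le_half_pow a b K : (forall n, a <= b + K * (1/2)^n) -> a <= b.
Proof.
  intros H. destruct (Rle_dec a b) as [|Hn]; auto. exfalso.
  destruct (Rle_dec K 0).
  - specialize (H O). simpl in H. lra.
  - destruct (half_pow_lt ((a - b) / K)) as [N HN]. { apply Rdiv_lt_0_compat; lra. }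
    specialize (H N).
    assert (K * (1/2)^N < a - b); [|lra].
    apply Rmult_lt_reg_r with (/ K). apply Rinv_0_lt_compat; lra.
    replace (K * (1/2)^N * / K) with ((1/2)^N) by (field; lra). exact HN.
Qed.

Lemma C_eq_of_le_half_pow (a b : C) K : (forall n, Cmod (a - b) <= K * (1/2)^n) -> a = b.
Proof.
  intros H. assert (E : (a - b)%C = 0%C).
  { apply Cmod_eq_0, Rle_antisym; [|apply Cmod_ge_0].
    apply le_of_le_half_pow with K. intros n. rewrite Rplus_0_l. auto. }
  replace a with ((a - b) + b)%C by ring. rewrite E. ring.
Qed.

Lemma Lim_seq_modulus (u B : nat -> R) : (forall n k, (n <= k)%nat -> Rabs (u k - u n) <= B n) ->
  (forall eps, 0 < eps -> exists N, B N < eps) ->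
  forall n, Rabs (real (Lim_seq u) - u n) <= B n.
Proof.
  intros H1 H2.
  assert (Hc : ex_finite_lim_seq u).
  { apply ex_lim_seq_cauchy_corr. intros eps. destruct (H2 (eps/2)) as [N HN]. destruct eps; simpl; lra.
    exists N. intros n k Hn Hk. pose proof (H1 N n Hn). pose proof (H1 N k Hk).
    replace (u n - u k) with ((u n - u N) - (u k - u N)) by ring.
    eapply Rle_lt_trans. apply Rabs_triang. rewrite Rabs_Ropp. lra. }
  destruct Hc as [l Hl]. rewrite (is_lim_seq_unique _ _ Hl). simpl.
  intros n. apply is_lim_seq_spec in Hl.
  apply le_of_le_half_pow with 1. intros k.
  assert (Hp : 0 < (1/2)^k) by (apply pow_lt; lra).
  destruct (Hl (mkposreal _ Hp)) as [N HN]. simpl in HN.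
  specialize (HN (max N n) (Nat.le_max_l _ _)). specialize (H1 n (max N n) (Nat.le_max_r _ _)).
  replace (l - u n) with ((u (max N n) - u n) - (u (max N n) - l)) by ring.
  eapply Rle_trans. apply Rabs_triang. rewrite Rabs_Ropp. lra.
Qed.

Lemma nonneg_of_approx (l : C -> R) c z : (forall p q, Rabs (l p - l q) <= c * Cmod (p - q)) ->
  (forall n, exists p, 0 <= l p /\ Cmod (z - p) <= 2 * (1/2)^n) -> 0 <= l z.
Proof.
  intros Hl H. apply le_of_le_half_pow with (2 * Rabs c). intros n. destruct (H n) as [p [Hp Hd]].
  specialize (Hl z p). apply Rabs_le_between in Hl. destruct Hl as [Hl _].
  pose proof (Rle_abs c). pose proof (Cmod_ge_0 (z - p)%C). pose proof (Rabs_pos c).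
  assert (c * Cmod (z - p) <= Rabs c * (2 * (1/2)^n)) by nra. lra.
Qed.

Definition lip_up_to (g : R -> C) (e : R) : Prop :=
  forall t s, 0 <= t -> t <= s -> s <= 1 -> Cmod (g t - g s) <= (s - t) + e.

Lemma lip_up_to_ext g h e : (forall t, g t = h t) -> lip_up_to g e -> lip_up_to h e.
Proof. intros E H t s H0 H1 H2. rewrite <- !E. auto. Qed.

Lemma lip_up_to_exact g : lip_up_to g 0 ->
  forall t s, 0 <= t <= 1 -> 0 <= s <= 1 -> Cmod (g t - g s) <= Rabs (t - s).
Proof.
  intros H t s Ht Hs. destruct (Rle_dec t s).
  - rewrite Rabs_left1 by lra. specialize (H t s). lra.
  - rewrite Rabs_right, Cmod_sym by lra. specialize (H s t). lra.
Qed.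

Lemma lip_up_to_of_bounded g e : 2 <= e -> (forall t, Cmod (g t) <= 1) -> lip_up_to g e.
Proof.
  intros He Hg t s H0 H1 H2. eapply Rle_trans; [apply Cmod_triangle|].
  rewrite Cmod_opp. pose proof (Hg t). pose proof (Hg s). lra.
Qed.

Lemma dist2_Cmod p q : dist2 p q = Cmod (p - q)%C.
Proof. destruct p, q. reflexivity. Qed.

Lemma lipschitz_path (g : R -> R * R) L : 0 <= L ->
  (forall t s, 0 <= t <= 1 -> 0 <= s <= 1 -> dist2 (g t) (g s) <= L * Rabs (t - s)) ->
  path_continuous g /\ path_length_le g L.
Proof.
  intros HL H. split.
  - intros t Ht eps Heps. exists (eps / (L + 1)). split; [apply Rdiv_lt_0_compat; lra|].
    intros s Hs Hst. eapply Rle_lt_trans; [apply H; auto|].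
    apply Rle_lt_trans with ((L + 1) * Rabs (s - t)); [pose proof (Rabs_pos (s - t)); nra|].
    apply Rmult_lt_reg_r with (/ (L + 1)); [apply Rinv_0_lt_compat; lra|].
    replace ((L + 1) * Rabs (s - t) * / (L + 1)) with (Rabs (s - t)) by (field; lra).
    replace (eps * / (L + 1)) with (eps / (L + 1)) by reflexivity. exact Hst.
  - intros n t H0 Hn Hmono.
    assert (Mono : forall i j, (i <= j <= n)%nat -> t i <= t j).
    { intros i j [Hij Hjn]. induction Hij; [lra|].
      apply Rle_trans with (t m); [apply IHHij; lia|apply Hmono; lia]. }
    assert (Rng : forall i, (i <= n)%nat -> 0 <= t i <= 1).
    { intros i Hi. rewrite <- H0, <- Hn. split; apply Mono; lia. }
    assert (forall k, (k <= n)%nat -> poly_sum g t k <= L * (t k - t O)).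
    { induction k as [|k IH]; intros Hk; simpl; [lra|].
      pose proof (IH ltac:(lia)). pose proof (Hmono k ltac:(lia)).
      pose proof (H (t (S k)) (t k) (Rng (S k) Hk) (Rng k ltac:(lia))).
      rewrite Rabs_right in * by lra. lra. }
    specialize (H1 n (le_n n)). rewrite Hn, H0 in H1. lra.
Qed.

Lemma lipschitz_concat (A B : R -> C) L1 L2 : 0 <= L1 -> 0 <= L2 -> A 0 = B 0 ->
  (forall t s, 0 <= t <= 1 -> 0 <= s <= 1 -> Cmod (A t - A s) <= L1 * Rabs (t - s)) ->
  (forall t s, 0 <= t <= 1 -> 0 <= s <= 1 -> Cmod (B t - B s) <= L2 * Rabs (t - s)) ->
  forall t s, 0 <= t <= 1 -> 0 <= s <= 1 ->
    Cmod ((if Rle_dec t (1/2) then A (1 - 2 * t) else B (2 * t - 1)) -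
          (if Rle_dec s (1/2) then A (1 - 2 * s) else B (2 * s - 1))) <= 2 * (L1 + L2) * Rabs (t - s).
Proof.
  intros HL1 HL2 E0 HA HB.
  assert (Ord : forall t s, 0 <= t <= 1 -> 0 <= s <= 1 -> t <= s ->
    Cmod ((if Rle_dec t (1/2) then A (1 - 2 * t) else B (2 * t - 1)) -
          (if Rle_dec s (1/2) then A (1 - 2 * s) else B (2 * s - 1))) <= 2 * (L1 + L2) * (s - t)).
  { intros t s Ht Hs Hts. destruct (Rle_dec t (1/2)), (Rle_dec s (1/2)); try lra.
    - pose proof (HA (1 - 2 * t) (1 - 2 * s) ltac:(lra) ltac:(lra)).
      rewrite Rabs_right in * by lra. nra.
    - pose proof (HA (1 - 2 * t) 0 ltac:(lra) ltac:(lra)). pose proof (HB 0 (2 * s - 1) ltac:(lra) ltac:(lra)).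
      rewrite Rabs_right in H by lra. rewrite Rabs_left1 in H0 by lra. rewrite E0 in H.
      pose proof (Cmod_triangle3 (A (1 - 2 * t)) (B 0) (B (2 * s - 1))).
      assert (L1 * (1 - 2 * t - 0) <= L1 * (2 * (s - t))) by (apply Rmult_le_compat_l; lra).
      assert (L2 * - (0 - (2 * s - 1)) <= L2 * (2 * (s - t))) by (apply Rmult_le_compat_l; lra).
      lra.
    - pose proof (HB (2 * t - 1) (2 * s - 1) ltac:(lra) ltac:(lra)).
      rewrite Rabs_left1 in * by lra. nra. }
  intros t s Ht Hs. destruct (Rle_dec t s).
  - rewrite Rabs_left1 by lra. specialize (Ord t s Ht Hs r). lra.
  - rewrite Rabs_right, Cmod_sym by lra. apply Ord; auto; lra.
Qed.

(** * The iterated function system *)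

Section Construction.

Variable m : nat.
Hypothesis Hm : (2 <= m)%nat.

Definition beta := PI / (2 * INR m).
Definition slope := tan_beta beta.
Definition sep := kappa beta.

Definition wt (n : nat) : R := if Nat.leb n 2 then 1/2 else slope / (4 * INR n).

Definition mid : C := (1/2, 0).

(* Seen from [mid], [psi k D] fills the sector between the angles [sector_angle k] and
   [sector_angle k + beta]; these sectors are pairwise at least [beta] apart. *)
Definition sector_index (k : nat) : nat := if Nat.eqb k 1 then (2 * m - 1)%nat else (2 * (k - 2))%nat.
Definition sector_angle (k : nat) : R := beta * INR (sector_index k).

Definition psi (k : nat) (z : C) : C :=
  if Nat.eqb k 1 then (RtoC (1/2) * z)%C else (mid + RtoC (wt k) * rot (sector_angle k) * z)%C.

Definition in_tri (z : C) := 0 <= snd z /\ snd z <= slope * fst z /\ snd z <= slope * (1 - fst z).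

Definition fixpt (e : nat) : C := if Nat.eqb e 2 then RtoC 1 else RtoC 0.

(* [mid] is coded both by [1 2 2 2 ...] and by [i 1 1 1 ...] for [i >= 2]. *)
Definition tail_letter (i : nat) : nat := if Nat.eqb i 1 then 2%nat else 1%nat.

Lemma INR_m_ge_2 : 2 <= INR m.
Proof. apply (le_INR 2). auto. Qed.

Lemma beta_mul : beta * (2 * INR m) = PI.
Proof. unfold beta. pose proof INR_m_ge_2. field. lra. Qed.

Lemma beta_range : 0 < beta <= PI / 4.
Proof.
  pose proof PI_RGT_0. pose proof INR_m_ge_2. pose proof beta_mul. split; nra.
Qed.

Lemma slope_pos : 0 < slope.
Proof. apply tan_beta_pos, beta_range. Qed.

Lemma slope_le_1 : slope <= 1.
Proof. apply tan_beta_le_1, beta_range. Qed.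

Lemma sep_pos : 0 < sep.
Proof. apply kappa_pos, beta_range. Qed.

Lemma wt_12 n : (n <= 2)%nat -> wt n = 1/2.
Proof. intros. unfold wt. destruct (Nat.leb_spec n 2); [auto|lia]. Qed.

Lemma wt_large n : (3 <= n)%nat -> 0 < wt n <= slope / 12.
Proof.
  intros H. unfold wt. destruct (Nat.leb_spec n 2); [lia|].
  pose proof slope_pos. pose proof (le_INR 3 n H). simpl in *.
  split; [apply Rdiv_lt_0_compat; lra|].
  apply Rmult_le_reg_r with (4 * INR n); [lra|]. field_simplify; nra.
Qed.

Lemma wt_pos n : 0 < wt n.
Proof.
  destruct (Nat.le_gt_cases n 2). rewrite wt_12 by lia; lra. apply wt_large. lia.
Qed.

Lemma wt_le_half n : wt n <= 1/2.
Proof.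
  destruct (Nat.le_gt_cases n 2). rewrite wt_12 by lia; lra.
  pose proof (wt_large n ltac:(lia)). pose proof slope_le_1. lra.
Qed.

Lemma wt_antitone n : (1 <= n)%nat -> wt (S n) <= wt n.
Proof.
  intros Hn. destruct (Nat.le_gt_cases n 2).
  - rewrite (wt_12 n) by lia. apply wt_le_half.
  - unfold wt. destruct (Nat.leb_spec (S n) 2); [lia|]. destruct (Nat.leb_spec n 2); [lia|].
    pose proof slope_pos. pose proof (lt_0_INR n ltac:(lia)). rewrite S_INR.
    apply Rmult_le_compat_l; [lra|]. apply Rinv_le_contravar; lra.
Qed.

Lemma wt_cv_0 : Un_cv wt 0.
Proof.
  intros eps Heps. pose proof slope_pos.
  destruct (INR_unbounded (Rmax (slope / eps) 3)) as [N HN].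
  exists N. intros n Hn. unfold Rdist. rewrite Rminus_0_r.
  pose proof (le_INR N n Hn). pose proof (Rmax_l (slope / eps) 3). pose proof (Rmax_r (slope / eps) 3).
  assert (H3 : (3 <= n)%nat) by (apply INR_le; simpl; lra).
  pose proof (wt_large n H3). rewrite Rabs_right by lra.
  unfold wt. destruct (Nat.leb_spec n 2); [lia|].
  assert (slope < eps * INR n).
  { apply Rmult_lt_reg_r with (/ eps). apply Rinv_0_lt_compat; lra.
    replace (eps * INR n * / eps) with (INR n) by (field; lra). unfold Rdiv in *. lra. }
  unfold Rdiv. apply Rmult_lt_reg_r with (4 * INR n); [lra|].
  rewrite Rmult_assoc, Rinv_l by lra. lra.
Qed.

Lemma weight_wt : weight wt.
Proof.
  repeat split; auto using wt_pos, wt_le_half, wt_antitone, wt_cv_0; apply wt_12; lia.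
Qed.

Lemma sector_angle_bounds k : letter m k -> 0 <= sector_angle k /\ sector_angle k + beta <= PI.
Proof.
  intros Hk. pose proof beta_range. pose proof beta_mul. unfold sector_angle.
  split; [apply Rmult_le_pos; [lra|apply pos_INR]|].
  assert (INR (sector_index k) + 1 <= 2 * INR m); [|nra].
  replace (2 * INR m) with (INR (2 * m)) by (rewrite mult_INR; reflexivity).
  rewrite <- S_INR. apply le_INR. unfold sector_index, letter in *.
  destruct (Nat.eqb_spec k 1); lia.
Qed.

Lemma sector_angle_1 : sector_angle 1 = PI - beta.
Proof.
  unfold sector_angle, sector_index. simpl Nat.eqb. cbv iota.
  rewrite minus_INR by lia. rewrite mult_INR, <- beta_mul. simpl. ring.
Qed.

Lemma sector_angle_separated i j : letter m i -> letter m j -> (sector_index i < sector_index j)%nat ->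
  2 * beta <= sector_angle j - sector_angle i <= PI - beta.
Proof.
  intros Hi Hj Hlt. unfold sector_angle.
  assert (D : (2 <= sector_index j - sector_index i <= 2 * m - 1)%nat).
  { unfold sector_index, letter in *. destruct (Nat.eqb_spec i 1); destruct (Nat.eqb_spec j 1); lia. }
  rewrite <- Rmult_minus_distr_l, <- minus_INR by lia.
  pose proof beta_range. pose proof beta_mul.
  pose proof (le_INR 2 _ (proj1 D)) as L1. pose proof (le_INR _ _ (proj2 D)) as L2.
  rewrite (minus_INR (2 * m) 1), mult_INR in L2 by lia. simpl in L1, L2. nra.
Qed.

Lemma sector_index_inj i j : letter m i -> letter m j -> i <> j -> sector_index i <> sector_index j.
Proof. unfold sector_index, letter. intros. destruct (Nat.eqb_spec i 1); destruct (Nat.eqb_spec j 1); lia. Qed.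

Lemma in_tri_0 : in_tri 0%C.
Proof. unfold in_tri. simpl. pose proof slope_pos. repeat split; nra. Qed.

Lemma in_tri_bounds z : in_tri z -> 0 <= fst z <= 1 /\ 0 <= snd z <= 1/2.
Proof.
  unfold in_tri. intros [H1 [H2 H3]]. pose proof slope_pos. pose proof slope_le_1.
  assert (0 <= fst z) by nra. assert (fst z <= 1) by nra. nra.
Qed.

Lemma in_tri_Cmod z : in_tri z -> Cmod z <= 1.
Proof.
  intros H. destruct (in_tri_bounds z H) as [[X0 X1] _]. destruct H as [H1 [H2 H3]].
  pose proof slope_pos. pose proof slope_le_1. pose proof (Cmod_ge_0 z).
  assert (Cmod z ^ 2 <= 1); [|nra]. rewrite Cmod2_alt.
  assert (snd z <= fst z) by nra. assert (snd z <= 1 - fst z) by nra.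
  assert (snd z * snd z <= snd z * (1 - fst z)) by (apply Rmult_le_compat_l; lra).
  assert (snd z * (1 - fst z) <= fst z * (1 - fst z)) by (apply Rmult_le_compat_r; lra).
  unfold Re, Im. nra.
Qed.

Lemma psi_1 z : psi 1 z = (fst z / 2, snd z / 2).
Proof. unfold psi. simpl. apply injective_projections; simpl; field. Qed.

Lemma psi_ge_2 k z : (2 <= k)%nat -> psi k z = (mid + RtoC (wt k) * rot (sector_angle k) * z)%C.
Proof. intros. unfold psi. destruct (Nat.eqb_spec k 1); [lia|reflexivity]. Qed.

Lemma psi_2 z : psi 2 z = (1/2 + fst z / 2, snd z / 2).
Proof.
  rewrite psi_ge_2 by lia. rewrite wt_12 by lia. unfold sector_angle, mid, rot. simpl.
  rewrite Rmult_0_r, cos_0, sin_0. apply injective_projections; simpl; field.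
Qed.

Lemma psi_1_0 : psi 1 (RtoC 0) = RtoC 0.
Proof. rewrite psi_1. apply injective_projections; simpl; field. Qed.

Lemma psi_2_1 : psi 2 (RtoC 1) = RtoC 1.
Proof. rewrite psi_2. apply injective_projections; simpl; field. Qed.

Lemma psi_ge_2_0 j : (2 <= j)%nat -> psi j (RtoC 0) = mid.
Proof. intros. rewrite psi_ge_2 by auto. ring. Qed.

Lemma psi_1_1 : psi 1 (RtoC 1) = mid.
Proof. rewrite psi_1. unfold mid. apply injective_projections; simpl; field. Qed.

Lemma psi_dist k z w : Cmod (psi k z - psi k w) = wt k * Cmod (z - w).
Proof.
  pose proof (wt_pos k). unfold psi. destruct (Nat.eqb_spec k 1) as [->|].
  - replace (RtoC (1/2) * z - RtoC (1/2) * w)%C with (RtoC (1/2) * (z - w))%C by ring.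
    rewrite wt_12, Cmod_mult, Cmod_R, Rabs_right by (lia || lra). reflexivity.
  - replace (mid + RtoC (wt k) * rot (sector_angle k) * z - (mid + RtoC (wt k) * rot (sector_angle k) * w))%C
      with (RtoC (wt k) * (rot (sector_angle k) * (z - w)))%C by ring.
    rewrite Cmod_mult, Cmod_rot_mult, Cmod_R, Rabs_right by lra. reflexivity.
Qed.

Lemma psi_in_tri k z : letter m k -> in_tri z -> in_tri (psi k z).
Proof.
  intros Hk Hz. destruct (in_tri_bounds z Hz) as [[X0 X1] _]. pose proof Hz as [Y0 [Y1 Y2]].
  pose proof slope_pos. pose proof slope_le_1.
  destruct (Nat.eq_dec k 1) as [->|N1]. { rewrite psi_1. unfold in_tri in *. simpl. lra. }
  destruct (Nat.eq_dec k 2) as [->|N2]. { rewrite psi_2. unfold in_tri in *. simpl. lra. }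
  destruct (sector_angle_bounds k Hk) as [S1 S2].
  unfold letter in Hk. destruct (wt_large k ltac:(lia)) as [Wk0 Wk1].
  rewrite psi_ge_2 by lia. rewrite <- Cmult_assoc.
  set (s := sector_angle k) in *. set (w := (rot s * z)%C).
  assert (Wi : 0 <= snd w).
  { pose proof beta_range. pose proof (cos_beta_pos beta beta_range) as Cb.
    pose proof (tan_beta_cos beta beta_range) as Tc. fold slope in Tc.
    assert (0 <= sin s) by (apply sin_ge_0; lra).
    assert (Hsb : 0 <= sin (s + beta)) by (apply sin_ge_0; lra).
    rewrite sin_plus, <- Tc in Hsb.
    assert (0 <= sin s + slope * cos s) by nra.
    unfold w, rot, Cmult. simpl. destruct (Rle_dec 0 (cos s)); nra. }
  assert (Wm : Cmod w <= 1) by (unfold w; rewrite Cmod_rot_mult; apply in_tri_Cmod; auto).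
  pose proof (Cmod_fst w) as Wf. pose proof (Cmod_snd w) as Ws. clearbody w.
  apply Rabs_le_between in Wf. apply Rabs_le_between in Ws.
  unfold in_tri, mid. simpl. rewrite !Rmult_0_l, !Rminus_0_r, !Rplus_0_l, !Rplus_0_r.
  assert (wt k * snd w <= wt k) by nra.
  assert (- wt k <= wt k * fst w <= wt k) by (split; nra).
  assert (slope * wt k <= slope / 12) by nra.
  split; [|split]; nra.
Qed.

Lemma psi_fixpt e : (e = 1 \/ e = 2)%nat -> psi e (fixpt e) = fixpt e.
Proof.
  intros [-> | ->]; [rewrite psi_1|rewrite psi_2]; unfold fixpt; simpl;
    apply injective_projections; simpl; field.
Qed.

Lemma tail_letter_12 i : (tail_letter i = 1 \/ tail_letter i = 2)%nat.
Proof. unfold tail_letter. destruct (Nat.eqb i 1); auto. Qed.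

Lemma psi_tail_fixpt i : letter m i -> psi i (fixpt (tail_letter i)) = mid.
Proof.
  intros Hi. unfold tail_letter. destruct (Nat.eqb_spec i 1) as [->|N].
  - rewrite psi_1. unfold fixpt, mid. simpl. apply injective_projections; simpl; field.
  - unfold fixpt. simpl. rewrite psi_ge_2 by (unfold letter in Hi; lia). ring.
Qed.

Lemma psi_mid_dist i z : letter m i -> Cmod (psi i z - mid) = wt i * Cmod (z - fixpt (tail_letter i)).
Proof. intros Hi. rewrite <- (psi_tail_fixpt i Hi) at 1. apply psi_dist. Qed.

Lemma psi_in_sector i z : letter m i -> in_tri z -> in_sector beta (sector_angle i) (psi i z - mid).
Proof.
  intros Hi Hz. destruct (in_tri_bounds z Hz) as [[X0 X1] _]. pose proof Hz as [Y0 [Y1 Y2]].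
  pose proof slope_pos. unfold in_sector, in_cone. fold slope.
  destruct (Nat.eq_dec i 1) as [->|N1].
  - rewrite sector_angle_1. replace (- (PI - beta)) with (beta - PI) by ring.
    rewrite psi_1. unfold rot, Cmult, mid, Cminus, Cplus, Copp. simpl.
    rewrite cos_minus, sin_minus, cos_PI, sin_PI.
    pose proof (cos_beta_pos beta beta_range) as Cb.
    pose proof (tan_beta_cos beta beta_range) as Tc. fold slope in Tc. rewrite <- Tc.
    assert (0 <= cos beta * (slope * (1 - fst z) - snd z)) by nra.
    assert (0 <= cos beta * snd z * (slope * slope + 1))
      by (apply Rmult_le_pos; [apply Rmult_le_pos|]; nra).
    split; nra.
  - unfold letter in Hi. rewrite psi_ge_2 by lia.
    replace (rot (- sector_angle i) * (mid + RtoC (wt i) * rot (sector_angle i) * z - mid))%C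
      with (RtoC (wt i) * (rot (sector_angle i) * (rot (- sector_angle i) * z)))%C by ring.
    rewrite rot_opp_mult. unfold RtoC, Cmult. simpl. pose proof (wt_pos i). split; nra.
Qed.

Lemma psi_separated i j z z' : letter m i -> letter m j -> i <> j -> in_tri z -> in_tri z' ->
  sep * (Cmod (psi i z - mid) + Cmod (psi j z' - mid)) <= Cmod (psi i z - psi j z').
Proof.
  intros Hi Hj Hij Hz Hz'. pose proof (sector_index_inj i j Hi Hj Hij).
  replace (psi i z - psi j z')%C with ((psi i z - mid) - (psi j z' - mid))%C by ring.
  destruct (Nat.lt_gt_cases (sector_index i) (sector_index j)) as [[Hl|Hl] _]; auto.
  - apply in_sector_separated with (sector_angle i) (sector_angle j); auto using beta_range,
      psi_in_sector, sector_angle_separated.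
  - rewrite (Cmod_sym (psi i z - mid)%C), Rplus_comm.
    apply in_sector_separated with (sector_angle j) (sector_angle i); auto using beta_range,
      psi_in_sector, sector_angle_separated.
Qed.

Lemma psi_far_from_fixpt e k z : (e = 1 \/ e = 2)%nat -> letter m k -> k <> e -> in_tri z ->
  1/4 <= Cmod (psi k z - fixpt e).
Proof.
  intros He Hk Hke Hz. destruct (in_tri_bounds z Hz) as [[X0 X1] [Y0 Y1]]. unfold letter in Hk.
  assert (Hfar : (3 <= k)%nat -> 1/4 <= Cmod (psi k z - fixpt e)).
  { intros H3. destruct (wt_large k H3). pose proof slope_le_1. pose proof (in_tri_Cmod z Hz).
    assert (Cmod (psi k z - mid) <= 1/12).
    { rewrite psi_ge_2 by lia.
      replace (mid + RtoC (wt k) * rot (sector_angle k) * z - mid)%C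
        with (RtoC (wt k) * (rot (sector_angle k) * z))%C by ring.
      rewrite Cmod_mult, Cmod_rot_mult, Cmod_R, Rabs_right by lra.
      pose proof (Cmod_ge_0 z). nra. }
    assert (Cmod (mid - fixpt e) = 1/2).
    { destruct He as [-> | ->].
      - replace (mid - fixpt 1)%C with (RtoC (1/2))
          by (unfold mid, fixpt; apply injective_projections; simpl; ring).
        rewrite Cmod_R, Rabs_right; lra.
      - replace (mid - fixpt 2)%C with (RtoC (-1/2))
          by (unfold mid, fixpt; apply injective_projections; simpl; field).
        rewrite Cmod_R, Rabs_left; lra. }
    pose proof (Cmod_triangle3 mid (psi k z) (fixpt e)) as T.
    rewrite (Cmod_sym mid (psi k z)) in T. lra. }
  destruct He as [-> | ->].
  - destruct (Nat.eq_dec k 2) as [->|]; [|apply Hfar; lia].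
    rewrite psi_2. unfold fixpt. simpl. eapply Rle_trans; [|apply Cmod_fst]. simpl.
    rewrite Rabs_right; lra.
  - destruct (Nat.eq_dec k 1) as [->|]; [|apply Hfar; lia].
    rewrite psi_1. unfold fixpt. simpl. eapply Rle_trans; [|apply Cmod_fst]. simpl.
    rewrite Rabs_left1; lra.
Qed.

(** * The coding map *)

Fixpoint Psi (v : list nat) (z : C) : C :=
  match v with [] => z | k :: v' => psi k (Psi v' z) end.

Definition approx (w : nat -> nat) (n : nat) : C := Psi (pref w n) 0%C.

Definition coding (w : nat -> nat) : C :=
  (real (Lim_seq (fun n => fst (approx w n))), real (Lim_seq (fun n => snd (approx w n)))).

Lemma Psi_app u v z : Psi (u ++ v) z = Psi u (Psi v z).
Proof. induction u as [|k u IH]; simpl; congruence. Qed.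

Lemma Delta_nonneg v : 0 <= Delta wt v.
Proof. induction v as [|k v IH]; simpl; [lra|]. pose proof (wt_pos k). nra. Qed.

Lemma Delta_app u v : Delta wt (u ++ v) = Delta wt u * Delta wt v.
Proof. induction u as [|k u IH]; simpl; [ring|]. rewrite IH. ring. Qed.

Lemma Delta_le_half_pow v : Delta wt v <= (1/2)^(length v).
Proof.
  induction v as [|k v IH]; simpl; [lra|].
  pose proof (wt_le_half k). pose proof (wt_pos k). pose proof (Delta_nonneg v).
  apply Rmult_le_compat; lra.
Qed.

Lemma Delta_le_1 v : Delta wt v <= 1.
Proof. eapply Rle_trans; [apply Delta_le_half_pow|]. apply (half_pow_antitone 0). lia. Qed.

Lemma Delta_repeat e k : (e <= 2)%nat -> Delta wt (repeat e k) = (1/2)^k.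
Proof. intros He. induction k as [|k IH]; simpl; auto. rewrite IH, wt_12 by lia. ring. Qed.

Lemma Psi_dist v z w : Cmod (Psi v z - Psi v w) = Delta wt v * Cmod (z - w).
Proof. induction v as [|k v IH]; simpl; [ring|]. rewrite psi_dist, IH. ring. Qed.

Lemma Psi_in_tri v z : fword m v -> in_tri z -> in_tri (Psi v z).
Proof. intros Hv Hz. induction Hv; simpl; auto using psi_in_tri. Qed.

Lemma Psi_repeat_fixpt e k : (e = 1 \/ e = 2)%nat -> Psi (repeat e k) (fixpt e) = fixpt e.
Proof. intros He. induction k as [|k IH]; simpl; [reflexivity|]. rewrite IH. apply psi_fixpt; auto. Qed.

Lemma approx_step w n : Cmod (approx w (S n) - approx w n) <= (1/2)^n / 2.
Proof.
  unfold approx. rewrite pref_Sr, Psi_app, Psi_dist. simpl.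
  pose proof (Delta_le_half_pow (pref w n)) as D. rewrite pref_length in D.
  pose proof (Delta_nonneg (pref w n)).
  replace (psi (w n) 0%C - 0)%C with (psi (w n) 0%C) by ring.
  assert (Cmod (psi (w n) 0%C) <= 1/2).
  { unfold psi. destruct (Nat.eqb (w n) 1).
    - replace (RtoC (1/2) * 0)%C with (RtoC 0) by ring. rewrite Cmod_0. lra.
    - replace (mid + RtoC (wt (w n)) * rot (sector_angle (w n)) * 0)%C with (RtoC (1/2))
        by (unfold mid; apply injective_projections; simpl; ring).
      rewrite Cmod_R, Rabs_right; lra. }
  pose proof (Cmod_ge_0 (psi (w n) 0%C)).
  apply Rle_trans with ((1/2)^n * (1/2)); [apply Rmult_le_compat|]; lra.
Qed.

Lemma approx_cauchy w n k : (n <= k)%nat -> Cmod (approx w k - approx w n) <= (1/2)^n.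
Proof.
  intros H. replace k with (n + (k - n))%nat by lia.
  assert (Hj : forall j, Cmod (approx w (n + j) - approx w n) <= (1/2)^n * (1 - (1/2)^j)).
  { induction j as [|j IH].
    - rewrite Nat.add_0_r. replace (approx w n - approx w n)%C with (RtoC 0) by ring.
      rewrite Cmod_0. simpl. lra.
    - eapply Rle_trans; [apply (Cmod_triangle3 _ (approx w (n + j)))|].
      rewrite Nat.add_succ_r. pose proof (approx_step w (n + j)). rewrite pow_add in *. simpl. lra. }
  eapply Rle_trans; [apply Hj|].
  pose proof (pow_le (1/2) n ltac:(lra)). pose proof (pow_le (1/2) (k - n) ltac:(lra)). nra.
Qed.

Lemma coding_approx w n : Cmod (coding w - approx w n) <= 2 * (1/2)^n.
Proof.
  assert (Hcoord : forall (p : C -> R), (forall z, Rabs (p z) <= Cmod z) ->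
            (forall z z', p (z - z')%C = p z - p z') ->
            Rabs (real (Lim_seq (fun n => p (approx w n))) - p (approx w n)) <= (1/2)^n).
  { intros p Hp Hlin. apply (Lim_seq_modulus (fun n => p (approx w n))); [|apply half_pow_lt].
    intros a b Hab. rewrite <- Hlin. eapply Rle_trans; [apply Hp|apply approx_cauchy; auto]. }
  pose proof (Hcoord fst Cmod_fst (fun _ _ => eq_refl)) as H1.
  pose proof (Hcoord snd Cmod_snd (fun _ _ => eq_refl)) as H2.
  eapply Rle_trans; [apply Cmod_2Rmax|].
  assert (sqrt 2 <= 2) by (rewrite <- (sqrt_pow2 2) at 2 by lra; apply sqrt_le_1; lra).
  assert (0 <= Rmax (Rabs (fst (coding w - approx w n)%C)) (Rabs (snd (coding w - approx w n)%C)) <= (1/2)^n).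
  { split; [eapply Rle_trans; [apply Rabs_pos|apply Rmax_l]|apply Rmax_lub; auto]. }
  pose proof (sqrt_pos 2). pose proof (pow_le (1/2) n ltac:(lra)). nra.
Qed.

Lemma coding_unique w z K : (forall n, Cmod (z - approx w n) <= K * (1/2)^n) -> z = coding w.
Proof.
  intros H. apply C_eq_of_le_half_pow with (K + 2). intros n.
  eapply Rle_trans; [apply (Cmod_triangle3 z (approx w n))|].
  rewrite (Cmod_sym (approx w n)). pose proof (H n). pose proof (coding_approx w n). lra.
Qed.

Lemma coding_ext x y : (forall k, x k = y k) -> coding x = coding y.
Proof.
  intros H. unfold coding, approx. do 2 f_equal; apply Lim_seq_ext; intros n; rewrite (pref_ext x y); auto.
Qed.

Lemma coding_in_tri w : iword m w -> in_tri (coding w).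
Proof.
  intros Hw.
  assert (Aff : forall a b c, (forall p, in_tri p -> 0 <= a * fst p + b * snd p + c) ->
                0 <= a * fst (coding w) + b * snd (coding w) + c).
  { intros a b c Hp. apply (nonneg_of_approx (fun z => a * fst z + b * snd z + c) (Rabs a + Rabs b)).
    - intros p q. replace (a * fst p + b * snd p + c - (a * fst q + b * snd q + c))
        with (a * fst (p - q)%C + b * snd (p - q)%C) by (simpl; ring).
      eapply Rle_trans; [apply Rabs_triang|]. rewrite !Rabs_mult.
      pose proof (Cmod_fst (p - q)%C). pose proof (Cmod_snd (p - q)%C).
      pose proof (Rabs_pos a). pose proof (Rabs_pos b). nra.
    - intros n. exists (approx w n). split; [|apply coding_approx].
      apply Hp, Psi_in_tri; [apply fword_pref; auto|apply in_tri_0]. }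
  unfold in_tri. split; [|split].
  - pose proof (Aff 0 1 0 ltac:(intros p [H _]; lra)). lra.
  - pose proof (Aff slope (-1) 0 ltac:(intros p [_ [H _]]; lra)). lra.
  - pose proof (Aff (- slope) (-1) slope ltac:(intros p [_ [_ H]]; lra)). lra.
Qed.

Lemma coding_cons k w : letter m k -> iword m w -> coding (scons k w) = psi k (coding w).
Proof.
  intros Hk Hw. symmetry. apply coding_unique with 2. intros [|n]; unfold approx.
  - simpl. replace (psi k (coding w) - 0)%C with (psi k (coding w)) by ring.
    pose proof (in_tri_Cmod _ (psi_in_tri k _ Hk (coding_in_tri w Hw))). lra.
  - rewrite pref_S. change (pref (shift (scons k w)) n) with (pref w n). simpl. rewrite psi_dist.
    pose proof (coding_approx w n). pose proof (Cmod_ge_0 (coding w - approx w n)%C).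
    pose proof (wt_le_half k). pose proof (wt_pos k). unfold approx in *.
    apply Rle_trans with ((1/2) * (2 * (1/2)^n)); [apply Rmult_le_compat|]; lra.
Qed.

Lemma coding_prepend v w : fword m v -> iword m w -> coding (prepend v w) = Psi v (coding w).
Proof.
  intros Hv Hw. induction Hv as [|k v Hk Hv IH]; simpl; auto.
  rewrite coding_cons, IH; auto using iword_prepend.
Qed.

Lemma coding_ibegins x v : iword m x -> ibegins x v -> coding x = Psi v (coding (shiftn (length v) x)).
Proof.
  intros Hx Hv. rewrite (coding_ext x (prepend v (shiftn (length v) x))) by (apply ibegins_decomp; auto).
  apply coding_prepend; [eapply fword_of_ibegins; eauto|apply iword_shiftn; auto].
Qed.

Lemma coding_shiftn x n : iword m x -> coding (shiftn n x) = psi (x n) (coding (shiftn (S n) x)).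
Proof.
  intros Hx. rewrite (coding_ext _ _ (shiftn_scons x n)). apply coding_cons; auto using iword_shiftn.
Qed.

Lemma coding_cylinder x v : iword m x -> ibegins x v -> Cmod (coding x - Psi v 0%C) <= Delta wt v.
Proof.
  intros Hx Hv. rewrite (coding_ibegins x v Hx Hv), Psi_dist, Cminus_0_r.
  pose proof (in_tri_Cmod _ (coding_in_tri _ (iword_shiftn _ (length v) _ Hx))).
  pose proof (Delta_nonneg v). nra.
Qed.

Lemma coding_cst e : (e = 1 \/ e = 2)%nat -> coding (cst e) = fixpt e.
Proof.
  intros He. assert (Hl : letter m e) by (unfold letter; lia).
  assert (E : coding (cst e) = psi e (coding (cst e))).
  { rewrite <- coding_cons by auto using iword_cst. apply coding_ext. intros [|k]; reflexivity. }
  apply C_eq_of_le_half_pow with 2. intros n. induction n as [|n IH].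
  - eapply Rle_trans; [apply (Cmod_triangle3 _ 0%C)|]. rewrite Cminus_0_r, Cmod_sym, Cminus_0_r.
    pose proof (in_tri_Cmod _ (coding_in_tri _ (iword_cst m e Hl))).
    assert (Cmod (fixpt e) <= 1) by (unfold fixpt; destruct (Nat.eqb e 2); rewrite Cmod_R, ?Rabs_R1, ?Rabs_R0; lra).
    simpl. lra.
  - rewrite E, <- (psi_fixpt e He) at 1. rewrite psi_dist, wt_12 by lia. simpl. lra.
Qed.

Lemma coding_identified v i : fword m v -> letter m i ->
  coding (prepend v (scons i (cst (tail_letter i)))) = Psi v mid.
Proof.
  intros Hv Hi. pose proof (tail_letter_12 i).
  assert (Ht : letter m (tail_letter i)) by (unfold letter; lia).
  rewrite coding_prepend, coding_cons, coding_cst, psi_tail_fixpt; auto using iword_scons, iword_cst.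
Qed.

(** * Comparison of [rho] with the Euclidean distance *)

Lemma identified_coding_eq r i : fword m r -> (2 <= i <= m)%nat ->
  coding (prepend r (scons 1 (cst 2))) = coding (prepend r (scons i (cst 1))).
Proof.
  intros Hr Hi.
  pose proof (coding_identified r 1 Hr ltac:(unfold letter; lia)) as E1.
  pose proof (coding_identified r i Hr ltac:(unfold letter; lia)) as E2.
  unfold tail_letter in E1, E2. destruct (Nat.eqb_spec i 1); [lia|]. simpl in E1. congruence.
Qed.

Lemma coding_dist_common_prefix x y v : iword m x -> iword m y -> ibegins x v -> ibegins y v ->
  Cmod (coding x - coding y) <= 2 * Delta wt v.
Proof.
  intros Hx Hy Bx By. pose proof (coding_cylinder x v Hx Bx). pose proof (coding_cylinder y v Hy By).
  pose proof (Cmod_triangle3 (coding x) (Psi v 0) (coding y)). rewrite (Cmod_sym (Psi v 0)) in *. lra.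
Qed.

Lemma coding_dist_Edge n s t x y : Edge m n s t -> length s = n -> length t = n ->
  iword m x -> iword m y -> ibegins x s -> ibegins y t ->
  Cmod (coding x - coding y) <= 4 * (1/2)^n.
Proof.
  intros HE Ls Lt Hx Hy Bx By. destruct (Edge_inv m n s t HE) as [r [i [k [Hr [Hi Hst]]]]].
  set (zs := prepend r (scons 1 (cst 2))). set (zt := prepend r (scons i (cst 1))).
  assert (Hz : forall a b, letter m a -> letter m b -> iword m (prepend r (scons a (cst b)))).
  { intros a b Ha Hb. apply iword_prepend, iword_scons, iword_cst; auto. }
  assert (Hzs : iword m zs) by (apply Hz; unfold letter; lia).
  assert (Hzt : iword m zt) by (apply Hz; unfold letter; lia).
  assert (Ezz : coding zs = coding zt) by (apply identified_coding_eq; auto).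
  assert (D : forall v, length v = n -> Delta wt v <= (1/2)^n)
    by (intros v <-; apply Delta_le_half_pow).
  assert (Gen : forall a b, iword m a -> iword m b -> coding a = coding b ->
                  ibegins a s -> ibegins b t -> Cmod (coding x - coding y) <= 4 * (1/2)^n).
  { intros a b Ha Hb Eab Ba Bb.
    pose proof (coding_dist_common_prefix x a s Hx Ha Bx Ba).
    pose proof (coding_dist_common_prefix b y t Hb Hy Bb By).
    pose proof (D s Ls). pose proof (D t Lt).
    pose proof (Cmod_triangle3 (coding x) (coding a) (coding y)).
    rewrite Eab in *. pose proof (Cmod_triangle3 (coding x) (coding b) (coding y)). lra. }
  destruct Hst as [[-> ->]|[-> ->]].
  - apply (Gen zs zt); auto; apply ibegins_prepend_cst.
  - apply (Gen zt zs); auto; apply ibegins_prepend_cst.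
Qed.

Lemma wedge_nonempty_close u1 u2 : wedge_nonempty m u1 u2 -> forall eps, 0 < eps ->
  exists x1 x2, iword m x1 /\ iword m x2 /\ ibegins x1 u1 /\ ibegins x2 u2 /\
     Cmod (coding x1 - coding x2) <= eps.
Proof.
  assert (Half : forall u1 u2 w, wedge_half m u1 u2 w -> forall eps, 0 < eps ->
    exists x1 x2, iword m x1 /\ iword m x2 /\ ibegins x1 u1 /\ ibegins x2 u2 /\
      Cmod (coding x1 - coding x2) <= eps).
  { intros v1 v2 w [Hw [B1 H2]] eps Heps.
    destruct (half_pow_lt (eps / 4)) as [N HN]; [lra|].
    set (n := S (N + Nat.max (length v1) (length v2))).
    destruct (H2 n ltac:(unfold n; lia)) as [u [Lu [Fu [Bu Eu]]]].
    assert (Hx2 : iword m (prepend u (cst 1))) by (apply iword_prepend, iword_cst; auto; unfold letter; lia).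
    exists w, (prepend u (cst 1)). split; [auto|split; [auto|split; [auto|split]]].
    - unfold ibegins. rewrite pref_prepend_le by (unfold n in Lu; lia). exact Bu.
    - eapply Rle_trans.
      + apply (coding_dist_Edge n (pref w n) u); auto using pref_length, ibegins_pref, ibegins_prepend.
      + pose proof (half_pow_antitone N n ltac:(unfold n; lia)). lra. }
  intros [w [H|H]] eps Heps.
  - eapply Half; eauto.
  - destruct (Half _ _ _ H eps Heps) as [x1 [x2 [A [B [C [D E]]]]]].
    exists x2, x1. rewrite Cmod_sym. auto.
Qed.

Lemma coding_dist_chain vs : vs <> [] -> consecutive_wedges m vs ->
  forall p q, iword m p -> iword m q -> ibegins p (hd [] vs) -> ibegins q (last vs []) ->
  forall eps, 0 < eps -> Cmod (coding p - coding q) <= 2 * chain_sum wt vs + INR (length vs) * eps.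
Proof.
  induction vs as [|v rest IH]; intros Hne Hc p q Hp Hq Bp Bq eps Heps; [congruence|].
  destruct rest as [|v2 rest'].
  - simpl in *. pose proof (coding_dist_common_prefix p q v Hp Hq Bp Bq). lra.
  - destruct Hc as [Hw Hc].
    destruct (wedge_nonempty_close v v2 Hw eps Heps) as [x1 [x2 [H1 [H2 [B1 [B2 E]]]]]].
    pose proof (IH ltac:(discriminate) Hc x2 q H2 Hq B2 Bq eps Heps).
    pose proof (coding_dist_common_prefix p x1 v Hp H1 Bp B1).
    pose proof (Cmod_triangle3 (coding p) (coding x1) (coding q)).
    pose proof (Cmod_triangle3 (coding x1) (coding x2) (coding q)).
    change (chain_sum wt (v :: v2 :: rest')) with (Delta wt v + chain_sum wt (v2 :: rest')).
    change (length (v :: v2 :: rest')) with (S (length (v2 :: rest'))). rewrite S_INR. lra.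
Qed.

Lemma chain_sum_nonneg vs : 0 <= chain_sum wt vs.
Proof. induction vs as [|v vs IH]; simpl; [lra|]. pose proof (Delta_nonneg v). lra. Qed.

Lemma rho_is_inf w u : (forall vs, chain m w u vs -> rho m wt w u <= chain_sum wt vs) /\
  (forall b, (forall vs, chain m w u vs -> b <= chain_sum wt vs) -> b <= rho m wt w u).
Proof.
  unfold rho. destruct (Glb_Rbar_correct (chain_sums m wt w u)) as [Hlb Hglb].
  assert (Hc1 : chain_sums m wt w u 1).
  { exists [[]]. split; [|simpl; ring].
    repeat split; [discriminate|repeat constructor]. }
  assert (L0 : is_lb_Rbar (chain_sums m wt w u) 0).
  { intros x [vs [_ ->]]. apply chain_sum_nonneg. }
  pose proof (Hlb 1 Hc1) as U. pose proof (Hglb 0 L0) as Lo.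
  destruct (Glb_Rbar (chain_sums m wt w u)) as [g| |]; simpl in U, Lo; try contradiction.
  split.
  - intros vs Hvs. apply (Hlb (chain_sum wt vs)). exists vs. auto.
  - intros b Hb. apply (Hglb (Finite b)). intros x [vs [Hvs ->]]. simpl. auto.
Qed.

Lemma rho_nonneg w u : 0 <= rho m wt w u.
Proof. apply rho_is_inf. intros. apply chain_sum_nonneg. Qed.

Lemma coding_dist_le_rho w u : iword m w -> iword m u -> Cmod (coding w - coding u) <= 2 * rho m wt w u.
Proof.
  intros Hw Hu. assert (Cmod (coding w - coding u) / 2 <= rho m wt w u); [|lra].
  apply rho_is_inf. intros vs [Hne [Hf [Bw [Bu Hc]]]].
  assert (Cmod (coding w - coding u) <= 2 * chain_sum wt vs); [|lra].
  apply le_of_le_half_pow with (INR (length vs)). intros n.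
  apply coding_dist_chain; auto. apply pow_lt. lra.
Qed.

Lemma rho_le_Delta w u v : fword m v -> ibegins w v -> ibegins u v -> rho m wt w u <= Delta wt v.
Proof.
  intros Hv Bw Bu. replace (Delta wt v) with (chain_sum wt [v]) by (simpl; ring).
  apply rho_is_inf. repeat split; auto. discriminate.
Qed.

Lemma rho_ext w u : iword m w -> (forall k, w k = u k) -> rho m wt w u = 0.
Proof.
  intros Hw H. apply Rle_antisym; [|apply rho_nonneg].
  apply le_of_le_half_pow with 1. intros n. rewrite Rplus_0_l, Rmult_1_l.
  eapply Rle_trans; [apply (rho_le_Delta w u (pref w n))|].
  - apply fword_pref; auto.
  - apply ibegins_pref.
  - unfold ibegins. rewrite pref_length. apply pref_ext. auto.
  - rewrite <- (pref_length w n) at 2. apply Delta_le_half_pow.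
Qed.

Definition ident_word (v : list nat) (i : nat) : nat -> nat := prepend v (scons i (cst (tail_letter i))).

Lemma iword_ident_word v i : fword m v -> letter m i -> iword m (ident_word v i).
Proof.
  intros Hv Hi. pose proof (tail_letter_12 i).
  apply iword_prepend, iword_scons, iword_cst; auto. unfold letter; lia.
Qed.

Lemma wedge_nonempty_ident_word v i N : fword m v -> letter m i -> (length v < N)%nat ->
  wedge_nonempty m (pref (ident_word v i) N) (pref (ident_word v 1) N).
Proof.
  intros Hv Hi HN. destruct (Nat.eq_dec i 1) as [->|Ni].
  - apply wedge_nonempty_common with (ident_word v 1); auto using iword_ident_word, ibegins_pref.
  - unfold ident_word, tail_letter. destruct (Nat.eqb_spec i 1); [lia|]. simpl.
    apply wedge_nonempty_identified; auto. unfold letter in Hi; lia.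
Qed.

(* The chain [v i e^k, ident_word v i, ident_word v 1, ident_word v j, v j e'^l]: the three
   middle links pass through the point [Psi v mid] and can be taken arbitrarily short. *)
Lemma rho_le_split x y v i j k l : iword m x -> iword m y -> fword m v -> letter m i -> letter m j ->
  ibegins x (v ++ i :: repeat (tail_letter i) k) -> ibegins y (v ++ j :: repeat (tail_letter j) l) ->
  rho m wt x y <= Delta wt (v ++ i :: repeat (tail_letter i) k) + Delta wt (v ++ j :: repeat (tail_letter j) l).
Proof.
  intros Hx Hy Hv Hi Hj Bx By.
  set (V1 := v ++ i :: repeat (tail_letter i) k). set (V2 := v ++ j :: repeat (tail_letter j) l).
  apply le_of_le_half_pow with 3. intros n.
  set (N := S (n + length v)).
  assert (H1 : letter m 1) by (unfold letter; lia).
  assert (DN : forall z, Delta wt (pref z N) <= (1/2)^n).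
  { intros z. eapply Rle_trans; [apply Delta_le_half_pow|]. rewrite pref_length.
    apply half_pow_antitone. unfold N; lia. }
  eapply Rle_trans; [apply (proj1 (rho_is_inf x y)
    [V1; pref (ident_word v i) N; pref (ident_word v 1) N; pref (ident_word v j) N; V2])|].
  - split; [discriminate|split; [|split; [exact Bx|split; [exact By|]]]].
    + assert (fword m V1) by (apply (fword_of_ibegins m x); auto).
      assert (fword m V2) by (apply (fword_of_ibegins m y); auto).
      assert (forall i', letter m i' -> fword m (pref (ident_word v i') N))
        by (intros; apply fword_pref, iword_ident_word; auto).
      repeat (apply Forall_cons; [solve [auto]|]). apply Forall_nil.
    + repeat split.
      * apply wedge_nonempty_common with (ident_word v i); auto using iword_ident_word, ibegins_pref.
        apply ibegins_prepend_cst.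
      * apply wedge_nonempty_ident_word; auto. unfold N; lia.
      * apply wedge_nonempty_sym, wedge_nonempty_ident_word; auto. unfold N; lia.
      * apply wedge_nonempty_common with (ident_word v j); auto using iword_ident_word, ibegins_pref.
        apply ibegins_prepend_cst.
  - unfold chain_sum. cbn [fold_right]. pose proof (DN (ident_word v i)). pose proof (DN (ident_word v j)).
    pose proof (DN (ident_word v 1)). lra.
Qed.

Lemma run_length_bound e z : (e = 1 \/ e = 2)%nat -> iword m z -> forall eps, 0 < eps ->
  exists k, ibegins z (repeat e k) /\ (1/2)^k <= 4 * Cmod (coding z - fixpt e) + eps.
Proof.
  intros He Hz eps Heps. pose proof (Cmod_ge_0 (coding z - fixpt e)%C).
  destruct (classic (exists n, z n <> e)) as [Hex|Hno].
  - destruct (first_index (fun n => z n <> e)) as [n0 [H0 Hmin]]; auto.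
    { intros k. destruct (Nat.eq_dec (z k) e); auto. }
    assert (Bz : ibegins z (repeat e n0)).
    { unfold ibegins. rewrite repeat_length, <- pref_cst. apply pref_ext_lt. intros k Hk.
      unfold cst. apply NNPP. auto. }
    exists n0. split; auto.
    rewrite (coding_ibegins z _ Hz Bz), repeat_length, <- (Psi_repeat_fixpt e n0 He), Psi_dist,
      Delta_repeat, coding_shiftn by (auto; lia).
    pose proof (psi_far_from_fixpt e (z n0) _ He (Hz n0) H0 (coding_in_tri _ (iword_shiftn _ (S n0) _ Hz))).
    pose proof (pow_lt (1/2) n0 ltac:(lra)). nra.
  - destruct (half_pow_lt eps Heps) as [k Hk]. exists k. split; [|lra].
    unfold ibegins. rewrite repeat_length, <- pref_cst. apply pref_ext. intros j.
    apply NNPP. intros Hj. apply Hno. eauto.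
Qed.

Lemma coding_dist_first_difference x y n : iword m x -> iword m y ->
  pref x n = pref y n -> x n <> y n ->
  sep * Delta wt (pref x n) *
    (wt (x n) * Cmod (coding (shiftn (S n) x) - fixpt (tail_letter (x n))) +
     wt (y n) * Cmod (coding (shiftn (S n) y) - fixpt (tail_letter (y n))))
  <= Cmod (coding x - coding y).
Proof.
  intros Hx Hy Ev Hij.
  assert (Split : forall z, iword m z -> pref z n = pref x n ->
            coding z = Psi (pref x n) (psi (z n) (coding (shiftn (S n) z)))).
  { intros z Hz Ez. rewrite <- Ez, <- coding_shiftn by auto.
    rewrite <- (pref_length z n) at 2. apply coding_ibegins; auto using ibegins_pref. }
  rewrite (Split x Hx eq_refl), (Split y Hy (eq_sym Ev)), Psi_dist.
  rewrite <- !psi_mid_dist by auto.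
  pose proof (psi_separated (x n) (y n) _ _ (Hx n) (Hy n) Hij
    (coding_in_tri _ (iword_shiftn m (S n) x Hx)) (coding_in_tri _ (iword_shiftn m (S n) y Hy))) as S.
  apply (Rmult_le_compat_l (Delta wt (pref x n))) in S; [lra|apply Delta_nonneg].
Qed.

Definition lower_const : R := 4 / sep.

Lemma lower_const_pos : 0 < lower_const.
Proof. apply Rdiv_lt_0_compat; [lra|apply sep_pos]. Qed.

Lemma ibegins_run x n k : ibegins (shiftn (S n) x) (repeat (tail_letter (x n)) k) ->
  ibegins x (pref x n ++ x n :: repeat (tail_letter (x n)) k).
Proof.
  intros H. replace (pref x n ++ x n :: repeat (tail_letter (x n)) k)
    with (pref x (S n) ++ repeat (tail_letter (x n)) k) by (rewrite pref_Sr, <- app_assoc; reflexivity).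
  apply ibegins_app_shiftn. exact H.
Qed.

(* [v] is the common prefix, [i] and [j] the first differing letters, [k] and [l] the
   lengths of the runs of tail letters that follow them. *)
Lemma split_words_bound x y : iword m x -> iword m y -> (exists n, x n <> y n) -> forall eps, 0 < eps ->
  exists v i j k l, fword m v /\ letter m i /\ letter m j /\
    ibegins x (v ++ i :: repeat (tail_letter i) k) /\ ibegins y (v ++ j :: repeat (tail_letter j) l) /\
    Delta wt (v ++ i :: repeat (tail_letter i) k) + Delta wt (v ++ j :: repeat (tail_letter j) l)
      <= lower_const * Cmod (coding x - coding y) + eps.
Proof.
  intros Hx Hy Hd eps Heps.
  destruct (first_index (fun n => x n <> y n)) as [n [Hij Hmin]]; auto.
  { intros k. destruct (Nat.eq_dec (x k) (y k)); auto. }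
  assert (Ev : pref x n = pref y n) by (apply pref_ext_lt; intros k Hk; apply NNPP; auto).
  pose proof (coding_dist_first_difference x y n Hx Hy Ev Hij) as Sep.
  destruct (run_length_bound _ _ (tail_letter_12 (x n)) (iword_shiftn m (S n) x Hx) eps Heps) as [k [Bk Hk]].
  destruct (run_length_bound _ _ (tail_letter_12 (y n)) (iword_shiftn m (S n) y Hy) eps Heps) as [l [Bl Hl]].
  exists (pref x n), (x n), (y n), k, l.
  split; [apply fword_pref; auto|split; [apply Hx|split; [apply Hy|split; [|split]]]].
  { apply ibegins_run; auto. }
  { rewrite Ev. apply ibegins_run; auto. }
  rewrite !Delta_app. simpl Delta. rewrite !Delta_repeat by (destruct (tail_letter_12 (x n)),
    (tail_letter_12 (y n)); lia).
  pose proof sep_pos. pose proof (Delta_nonneg (pref x n)). pose proof (Delta_le_1 (pref x n)).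
  pose proof (wt_pos (x n)). pose proof (wt_pos (y n)).
  pose proof (wt_le_half (x n)). pose proof (wt_le_half (y n)).
  set (D := Delta wt (pref x n)) in *. set (ax := wt (x n)) in *. set (ay := wt (y n)) in *.
  set (hx := Cmod (coding (shiftn (S n) x) - fixpt (tail_letter (x n)))) in *.
  set (hy := Cmod (coding (shiftn (S n) y) - fixpt (tail_letter (y n)))) in *.
  assert (D * (ax * (1/2)^k) <= D * (ax * (4 * hx + eps))) by (apply Rmult_le_compat_l; nra).
  assert (D * (ay * (1/2)^l) <= D * (ay * (4 * hy + eps))) by (apply Rmult_le_compat_l; nra).
  assert (D * (ax + ay) <= 1) by nra.
  assert (4 * D * (ax * hx + ay * hy) <= lower_const * Cmod (coding x - coding y)).
  { unfold lower_const. apply Rmult_le_reg_l with sep; [auto|].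
    replace (sep * (4 / sep * Cmod (coding x - coding y))) with (4 * Cmod (coding x - coding y))
      by (field; lra).
    lra. }
  nra.
Qed.

Lemma rho_le_coding_dist x y : iword m x -> iword m y ->
  rho m wt x y <= lower_const * Cmod (coding x - coding y).
Proof.
  intros Hx Hy. pose proof lower_const_pos. pose proof (Cmod_ge_0 (coding x - coding y)%C).
  destruct (classic (exists n, x n <> y n)) as [Hd|Hno].
  - apply le_of_le_half_pow with 1. intros p. rewrite Rmult_1_l.
    destruct (split_words_bound x y Hx Hy Hd ((1/2)^p) ltac:(apply pow_lt; lra))
      as [v [i [j [k [l [Fv [Hi [Hj [Bx [By Hs]]]]]]]]]].
    eapply Rle_trans; [apply (rho_le_split x y v i j k l); auto|exact Hs].
  - rewrite rho_ext; auto; [nra|]. intros k. apply NNPP. intros Hk. apply Hno. eauto.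
Qed.

Lemma bilip_embedding_coding : bilip_embedding m wt coding.
Proof.
  exists (lower_const + 2). pose proof lower_const_pos. split; [lra|].
  intros w u Hw Hu. rewrite dist2_Cmod.
  pose proof (rho_le_coding_dist w u Hw Hu). pose proof (coding_dist_le_rho w u Hw Hu).
  pose proof (rho_nonneg w u). pose proof (Cmod_ge_0 (coding w - coding u)%C).
  split; [|nra].
  apply Rmult_le_reg_r with (lower_const + 2); [lra|].
  unfold Rdiv. rewrite Rmult_assoc, Rinv_l by lra. nra.
Qed.

(** * Quasiconvexity of the image *)

Lemma psi_dist_le_half k z w K : Cmod (z - w) <= K -> Cmod (psi k z - psi k w) <= K / 2.
Proof.
  intros H. rewrite psi_dist. pose proof (wt_le_half k). pose proof (wt_pos k).
  pose proof (Cmod_ge_0 (z - w)%C). nra.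
Qed.

Lemma lip_up_to_psi k g e : lip_up_to g e -> lip_up_to (fun t => psi k (g t)) (e / 2).
Proof.
  intros H t s H0 H1 H2. eapply Rle_trans; [apply psi_dist_le_half, H; auto|]. lra.
Qed.

(* Only the second half carries an error, so the error is halved. *)
Lemma lip_up_to_join a g b h e : lip_up_to g 0 -> lip_up_to h e -> psi a (g 1) = psi b (h 0) ->
  lip_up_to (fun t => if Rle_dec t (1/2) then psi a (g (2 * t)) else psi b (h (2 * t - 1))) (e / 2).
Proof.
  intros Hg Hh Ej t s H0 H1 H2. cbv beta.
  assert (0 <= e) by (pose proof (Hh 0 0 ltac:(lra) ltac:(lra) ltac:(lra));
                      pose proof (Cmod_ge_0 (h 0 - h 0)%C); lra).
  destruct (Rle_dec t (1/2)); destruct (Rle_dec s (1/2)); try lra.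
  - pose proof (psi_dist_le_half a _ _ _ (Hg (2 * t) (2 * s) ltac:(lra) ltac:(lra) ltac:(lra))). lra.
  - pose proof (psi_dist_le_half a _ _ _ (Hg (2 * t) 1 ltac:(lra) ltac:(lra) ltac:(lra))).
    pose proof (psi_dist_le_half b _ _ _ (Hh 0 (2 * s - 1) ltac:(lra) ltac:(lra) ltac:(lra))).
    rewrite Ej in *.
    pose proof (Cmod_triangle3 (psi a (g (2 * t))) (psi b (h 0)) (psi b (h (2 * s - 1)))). lra.
  - pose proof (psi_dist_le_half b _ _ _ (Hh (2 * t - 1) (2 * s - 1) ltac:(lra) ltac:(lra) ltac:(lra))). lra.
Qed.

Inductive mode := Seg | FromZero | FromOne.

(* One step of the substitution generating the paths: [Seg] traces [0, 1] by binary
   expansion; [FromZero x] (resp. [FromOne x]) runs from [0] (resp. [1]) to the point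
   coded by [x], staying in [psi 1 D] (resp. [psi 2 D]) if [x] starts with [1] (resp. [2]),
   and otherwise along a halved copy of [0, 1] up to [mid], then inside [psi (x 0) D]. *)
Definition step (s : mode * (nat -> nat) * R) : nat * (mode * (nat -> nat) * R) :=
  let '(mo, x, t) := s in
  match mo with
  | Seg => if Rle_dec t (1/2) then (1%nat, (Seg, x, 2*t)) else (2%nat, (Seg, x, 2*t-1))
  | FromZero => if Nat.eqb (x O) 1 then (1%nat, (FromZero, shift x, t))
      else if Rle_dec t (1/2) then (1%nat, (Seg, x, 2*t)) else (x O, (FromZero, shift x, 2*t-1))
  | FromOne => if Nat.eqb (x O) 2 then (2%nat, (FromOne, shift x, t))
      else if Rle_dec t (1/2) then (2%nat, (Seg, x, 1 - 2*t))
      else if Nat.eqb (x O) 1 then (1%nat, (FromOne, shift x, 2*t-1)) else (x O, (FromZero, shift x, 2*t-1))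
  end.

Fixpoint path_word (s : mode * (nat -> nat) * R) (n : nat) : nat :=
  match n with O => fst (step s) | S n' => path_word (snd (step s)) n' end.

Lemma step_valid s : iword m (snd (fst s)) ->
  letter m (fst (step s)) /\ iword m (snd (fst (snd (step s)))).
Proof.
  destruct s as [[mo x] t]. simpl. intros Hx.
  assert (L1 : letter m 1) by (unfold letter; lia). assert (L2 : letter m 2) by (unfold letter; lia).
  pose proof (iword_shift m x Hx).
  destruct mo; simpl; repeat (destruct (Nat.eqb _ _) || destruct (Rle_dec _ _)); simpl; auto.
Qed.

Lemma iword_path_word s : iword m (snd (fst s)) -> iword m (path_word s).
Proof.
  intros H n. revert s H. induction n as [|n IH]; intros s H.
  - exact (proj1 (step_valid s H)).
  - apply IH. exact (proj2 (step_valid s H)).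
Qed.

Definition path_point (mo : mode) (x : nat -> nat) (t : R) : C := coding (path_word (mo, x, t)).

Lemma coding_path_word s : iword m (snd (fst s)) ->
  coding (path_word s) = psi (fst (step s)) (coding (path_word (snd (step s)))).
Proof.
  intros H. rewrite (coding_ext _ (scons (fst (step s)) (path_word (snd (step s))))) by (intros [|k]; reflexivity).
  apply coding_cons; [apply (step_valid s H)|apply iword_path_word, (step_valid s H)].
Qed.

Lemma path_point_bounded mo x t : iword m x -> Cmod (path_point mo x t) <= 1.
Proof. intros Hx. apply in_tri_Cmod, coding_in_tri, iword_path_word. exact Hx. Qed.

Lemma path_point_Seg x t : iword m x -> 0 <= t <= 1 -> path_point Seg x t = RtoC t.
Proof.
  intros Hx Ht. symmetry. apply C_eq_of_le_half_pow with 2. intros n. revert t Ht.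
  induction n as [|n IH]; intros t Ht.
  - eapply Rle_trans; [apply Cmod_triangle|]. rewrite Cmod_opp, Cmod_R, Rabs_right by lra.
    pose proof (path_point_bounded Seg x t Hx). simpl. lra.
  - unfold path_point. rewrite coding_path_word by auto. simpl step.
    destruct (Rle_dec t (1/2)); simpl fst; simpl snd.
    + replace (RtoC t) with (psi 1 (RtoC (2 * t))) by (rewrite psi_1; apply injective_projections; simpl; field).
      rewrite psi_dist, wt_12 by lia. specialize (IH (2 * t) ltac:(lra)). unfold path_point in IH. simpl. lra.
    + replace (RtoC t) with (psi 2 (RtoC (2 * t - 1))) by (rewrite psi_2; apply injective_projections; simpl; field).
      rewrite psi_dist, wt_12 by lia. specialize (IH (2 * t - 1) ltac:(lra)). unfold path_point in IH. simpl. lra.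
Qed.

Lemma path_point_FromZero x t : iword m x -> path_point FromZero x t =
  if Nat.eqb (x O) 1 then psi 1 (path_point FromZero (shift x) t)
  else if Rle_dec t (1/2) then psi 1 (path_point Seg x (2 * t))
  else psi (x O) (path_point FromZero (shift x) (2 * t - 1)).
Proof.
  intros Hx. unfold path_point. rewrite coding_path_word by auto. simpl step.
  repeat (destruct (Nat.eqb _ _) || destruct (Rle_dec _ _)); reflexivity.
Qed.

Lemma path_point_FromOne x t : iword m x -> path_point FromOne x t =
  if Nat.eqb (x O) 2 then psi 2 (path_point FromOne (shift x) t)
  else if Rle_dec t (1/2) then psi 2 (path_point Seg x (1 - 2 * t))
  else if Nat.eqb (x O) 1 then psi 1 (path_point FromOne (shift x) (2 * t - 1))
  else psi (x O) (path_point FromZero (shift x) (2 * t - 1)).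
Proof.
  intros Hx. unfold path_point. rewrite coding_path_word by auto. simpl step.
  repeat (destruct (Nat.eqb _ _) || destruct (Rle_dec _ _)); reflexivity.
Qed.

Lemma path_point_FromZero_0 x : iword m x -> path_point FromZero x 0 = RtoC 0.
Proof.
  intros Hx. apply C_eq_of_le_half_pow with 1. intros n. revert x Hx.
  induction n as [|n IH]; intros x Hx.
  - rewrite Cminus_0_r. pose proof (path_point_bounded FromZero x 0 Hx). simpl. lra.
  - rewrite path_point_FromZero by auto. destruct (Nat.eqb (x O) 1).
    + rewrite <- psi_1_0. eapply Rle_trans; [apply psi_dist_le_half, IH, iword_shift; auto|]. simpl. lra.
    + destruct (Rle_dec 0 (1/2)); [|lra]. rewrite Rmult_0_r, path_point_Seg, psi_1_0 by (auto; lra).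
      apply Cmod_sub_diag_le. pose proof (pow_le (1/2) (S n)). lra.
Qed.

Lemma path_point_FromOne_0 x : iword m x -> path_point FromOne x 0 = RtoC 1.
Proof.
  intros Hx. apply C_eq_of_le_half_pow with 2. intros n. revert x Hx.
  induction n as [|n IH]; intros x Hx.
  - eapply Rle_trans; [apply Cmod_triangle|]. rewrite Cmod_opp, Cmod_R, Rabs_R1.
    pose proof (path_point_bounded FromOne x 0 Hx). simpl. lra.
  - rewrite path_point_FromOne by auto. destruct (Nat.eqb (x O) 2).
    + rewrite <- psi_2_1. eapply Rle_trans; [apply psi_dist_le_half, IH, iword_shift; auto|]. simpl. lra.
    + destruct (Rle_dec 0 (1/2)); [|lra]. rewrite Rmult_0_r, Rminus_0_r, path_point_Seg, psi_2_1 by (auto; lra).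
      apply Cmod_sub_diag_le. pose proof (pow_le (1/2) (S n)). lra.
Qed.

Lemma path_point_1 mo x : mo <> Seg -> iword m x -> path_point mo x 1 = coding x.
Proof.
  intros Hmo Hx. apply C_eq_of_le_half_pow with 2. intros n. revert mo Hmo x Hx.
  induction n as [|n IH]; intros mo Hmo x Hx.
  - eapply Rle_trans; [apply (Cmod_triangle3 _ (RtoC 0))|]. rewrite Cminus_0_r, Cmod_sym, Cminus_0_r.
    pose proof (path_point_bounded mo x 1 Hx). pose proof (in_tri_Cmod _ (coding_in_tri x Hx)). simpl. lra.
  - assert (Hx' := iword_shift m x Hx).
    assert (Ex : coding x = psi (x O) (coding (shift x))).
    { rewrite <- coding_cons by auto. apply coding_ext. intros [|k]; reflexivity. }
    assert (Rec : forall mo' k, mo' <> Seg -> k = x O ->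
              Cmod (psi k (path_point mo' (shift x) 1) - coding x) <= 2 * (1/2)^(S n)).
    { intros mo' k Hmo' ->. rewrite Ex. eapply Rle_trans; [apply psi_dist_le_half, IH; auto|]. simpl. lra. }
    destruct mo; [congruence|rewrite path_point_FromZero by auto|rewrite path_point_FromOne by auto];
      replace (2 * 1 - 1) with 1 by ring;
      destruct (Nat.eqb_spec (x O) 1), (Nat.eqb_spec (x O) 2), (Rle_dec 1 (1/2)); try lra;
      apply Rec; congruence.
Qed.


Lemma lip_up_to_Seg x : iword m x ->
  lip_up_to (path_point Seg x) 0 /\ lip_up_to (fun u => path_point Seg x (1 - u)) 0.
Proof.
  intros Hx. split; intros t s H0 H1 H2; rewrite !path_point_Seg, Cmod_RtoC_sub by (auto; lra);
    [rewrite Rabs_left1|rewrite Rabs_right]; lra.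
Qed.

Lemma lip_up_to_path_point n x : iword m x ->
  lip_up_to (path_point FromZero x) (4 * (1/2)^n) /\ lip_up_to (path_point FromOne x) (4 * (1/2)^n).
Proof.
  revert x. induction n as [|n IH]; intros x Hx.
  { split; apply lip_up_to_of_bounded; auto using path_point_bounded; simpl; lra. }
  assert (Hx' := iword_shift m x Hx). destruct (IH _ Hx') as [IHz IHo].
  destruct (lip_up_to_Seg x Hx) as [Sg Sg'].
  replace (4 * (1/2)^(S n)) with (4 * (1/2)^n / 2) by (simpl; field).
  assert (Hxl : letter m (x O)) by apply Hx.
  assert (Mid : forall k, (2 <= k)%nat -> psi k (path_point FromZero (shift x) 0) = mid)
    by (intros; rewrite path_point_FromZero_0 by auto; apply psi_ge_2_0; auto).
  split.
  - destruct (Nat.eqb_spec (x O) 1) as [E|E].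
    + eapply lip_up_to_ext; [|apply (lip_up_to_psi 1 _ _ IHz)].
      intros t. rewrite path_point_FromZero, E by auto. reflexivity.
    + eapply lip_up_to_ext; [|apply (lip_up_to_join 1 _ (x O) _ _ Sg IHz)].
      * intros t. rewrite path_point_FromZero by auto. destruct (Nat.eqb_spec (x O) 1); [lia|reflexivity].
      * rewrite path_point_Seg, psi_1_1, Mid by (unfold letter in Hxl; auto || lia || lra). reflexivity.
  - destruct (Nat.eqb_spec (x O) 2) as [E|E].
    + eapply lip_up_to_ext; [|apply (lip_up_to_psi 2 _ _ IHo)].
      intros t. rewrite path_point_FromOne, E by auto. reflexivity.
    + assert (Seg_mid : psi 2 (path_point Seg x (1 - 1)) = mid)
        by (rewrite Rminus_eq_0, path_point_Seg, psi_ge_2_0 by (auto || lra); reflexivity).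
      destruct (Nat.eqb_spec (x O) 1) as [E1|E1].
      * eapply lip_up_to_ext; [|apply (lip_up_to_join 2 _ 1 _ _ Sg' IHo)].
        -- intros t. rewrite path_point_FromOne by auto.
           destruct (Nat.eqb_spec (x O) 2), (Nat.eqb_spec (x O) 1); try lia. reflexivity.
        -- rewrite Seg_mid, path_point_FromOne_0, psi_1_1 by auto. reflexivity.
      * eapply lip_up_to_ext; [|apply (lip_up_to_join 2 _ (x O) _ _ Sg' IHz)].
        -- intros t. rewrite path_point_FromOne by auto.
           destruct (Nat.eqb_spec (x O) 2), (Nat.eqb_spec (x O) 1); try lia. reflexivity.
        -- rewrite Seg_mid, Mid by (unfold letter in Hxl; lia). reflexivity.
Qed.

Lemma path_point_lipschitz mo x t s : mo <> Seg -> iword m x -> 0 <= t <= 1 -> 0 <= s <= 1 ->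
  Cmod (path_point mo x t - path_point mo x s) <= Rabs (t - s).
Proof.
  intros Hmo Hx. apply lip_up_to_exact. intros t' s' H0 H1 H2.
  apply le_of_le_half_pow with 4. intros n. rewrite Rplus_0_r.
  destruct (lip_up_to_path_point n x Hx) as [Hz Ho].
  destruct mo; [congruence|apply Hz|apply Ho]; auto.
Qed.

Definition mode_of (i : nat) : mode := if Nat.eqb i 1 then FromOne else FromZero.

Lemma path_point_mode_of_0 i x : iword m x -> path_point (mode_of i) x 0 = fixpt (tail_letter i).
Proof.
  intros Hx. unfold mode_of, tail_letter, fixpt. destruct (Nat.eqb i 1); simpl.
  - apply path_point_FromOne_0; auto.
  - apply path_point_FromZero_0; auto.
Qed.

Lemma arc_to_coding x v i k : iword m x -> fword m v -> letter m i ->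
  ibegins x (v ++ i :: repeat (tail_letter i) k) ->
  exists A : R -> C, A 0 = Psi v mid /\ A 1 = coding x /\
    (forall t s, 0 <= t <= 1 -> 0 <= s <= 1 ->
       Cmod (A t - A s) <= Delta wt (v ++ i :: repeat (tail_letter i) k) * Rabs (t - s)) /\
    (forall t, image m coding (A t)).
Proof.
  intros Hx Hv Hi Bx. set (V := v ++ i :: repeat (tail_letter i) k) in *.
  set (x1 := shiftn (length V) x).
  assert (Hx1 : iword m x1) by (apply iword_shiftn; auto).
  assert (FV : fword m V) by (apply (fword_of_ibegins m x); auto).
  assert (Hmo : mode_of i <> Seg) by (unfold mode_of; destruct (Nat.eqb i 1); discriminate).
  exists (fun t => Psi V (path_point (mode_of i) x1 t)). split; [|split; [|split]].
  - rewrite path_point_mode_of_0 by auto. unfold V. rewrite Psi_app. simpl.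
    rewrite Psi_repeat_fixpt, psi_tail_fixpt by (auto using tail_letter_12). reflexivity.
  - rewrite path_point_1 by auto. symmetry. apply coding_ibegins; auto.
  - intros t s Ht Hs. rewrite Psi_dist. pose proof (Delta_nonneg V).
    pose proof (path_point_lipschitz (mode_of i) x1 t s Hmo Hx1 Ht Hs). nra.
  - intros t. exists (prepend V (path_word (mode_of i, x1, t))).
    assert (iword m (path_word (mode_of i, x1, t))) by (apply iword_path_word; auto).
    split; [apply iword_prepend; auto|]. apply coding_prepend; auto.
Qed.

Definition qc_const : R := 2 * (lower_const + 1).

Lemma quasiconvex_path x y : iword m x -> iword m y -> exists g : R -> R * R,
  path_continuous g /\ (forall t, 0 <= t <= 1 -> image m coding (g t)) /\
  g 0 = coding x /\ g 1 = coding y /\ path_length_le g (qc_const * dist2 (coding x) (coding y)).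
Proof.
  intros Hx Hy. rewrite dist2_Cmod. pose proof lower_const_pos.
  destruct (classic (coding x = coding y)) as [Exy|Nxy].
  { exists (fun _ => coding x). rewrite <- Exy.
    replace (coding x - coding x)%C with (RtoC 0) by ring. rewrite Cmod_0, Rmult_0_r.
    destruct (lipschitz_path (fun _ => coding x) 0) as [C1 C2]; [lra| |].
    { intros. rewrite dist2_Cmod, Rmult_0_l. apply Cmod_sub_diag_le. lra. }
    split; [auto|split; [intros; exists x; auto|auto]]. }
  assert (Hd : exists n, x n <> y n).
  { apply NNPP. intros Hn. apply Nxy, coding_ext. intros k. apply NNPP. intros Hk. apply Hn. eauto. }
  assert (Hpos : 0 < Cmod (coding x - coding y)%C).
  { apply Cmod_gt_0. intros E. apply Nxy. replace (coding x) with ((coding x - coding y) + coding y)%C by ring.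
    rewrite E. ring. }
  destruct (split_words_bound x y Hx Hy Hd _ Hpos) as [v [i [j [k [l [Fv [Hi [Hj [Bx [By Hsum]]]]]]]]]].
  destruct (arc_to_coding x v i k Hx Fv Hi Bx) as [A [A0 [A1 [AL AI]]]].
  destruct (arc_to_coding y v j l Hy Fv Hj By) as [B [B0 [B1 [BL BI]]]].
  set (D1 := Delta wt (v ++ i :: repeat (tail_letter i) k)) in *.
  set (D2 := Delta wt (v ++ j :: repeat (tail_letter j) l)) in *.
  assert (0 <= D1 /\ 0 <= D2) as [] by (split; apply Delta_nonneg).
  set (g := fun t => if Rle_dec t (1/2) then A (1 - 2 * t) else B (2 * t - 1)).
  assert (Lip : forall t s, 0 <= t <= 1 -> 0 <= s <= 1 -> dist2 (g t) (g s) <= 2 * (D1 + D2) * Rabs (t - s)).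
  { intros t s Ht Hs. rewrite dist2_Cmod. unfold g. apply lipschitz_concat; auto. congruence. }
  destruct (lipschitz_path g (2 * (D1 + D2))) as [Gc Gl]; [lra|exact Lip|].
  exists g. split; [auto|split; [|split; [|split]]].
  - intros t Ht. unfold g. destruct (Rle_dec t (1/2)); auto.
  - unfold g. destruct (Rle_dec 0 (1/2)); [|lra]. rewrite Rmult_0_r, Rminus_0_r. auto.
  - unfold g. destruct (Rle_dec 1 (1/2)); [lra|]. replace (2 * 1 - 1) with 1 by ring. auto.
  - intros n t T0 Tn Tm. eapply Rle_trans; [apply Gl; auto|]. unfold qc_const. lra.
Qed.

Lemma quasiconvex_coding : quasiconvex (image m coding).
Proof. exists qc_const. intros p q [x [Hx <-]] [y [Hy <-]]. apply quasiconvex_path; auto. Qed.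

End Construction.

Theorem proposition10p1 :
  forall m : nat, (2 <= m)%nat ->
    exists a : nat -> R, weight a /\
      exists f : (nat -> nat) -> R * R,
        bilip_embedding m a f /\ quasiconvex (image m f).
Proof.
  intros m Hm. exists (wt m). split; [apply weight_wt; auto|].
  exists (coding m). split.
  - apply bilip_embedding_coding; auto.
  - apply quasiconvex_coding; auto.
Qed.
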